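(* Every probabilistic function computed by a probabilistic Turing machine is probabilistic recursive: $\mathscr{PC}\subseteq\mathscr{PR}$.
   Context: A pseudodistribution on a countable set $X$ is $\mathcal D:X\to[0,1]$ with $\sum_x\mathcal D(x)\le1$; $\mathcal D(X)$ is their set. A PF of arity $k$ is a function $\mathbb{N}^k\to\mathcal D(\mathbb{N})$. Basic PFs: $z(n)(0)=1$; $s(n)(n+1)=1$; $\Pi^n_m(k_1,\dots,k_n)(k_m)=1$; $r(x)(x)=r(x)(x+1)=1/2$ (other values $0$). Generalized composition $(f\odot(g_1,\dots,g_n))(\vec x)(y)=\sum_{z_1,\dots,z_n} f(z_1,\dots,z_n)(y)\prod_i g_i(\vec x)(z_i)$; primitive recursion $h=\mathrm{rec}(f,g)$: $h(\vec x,0)=f(\vec x)$, $h(\vec x,y+1)(w)=\sum_z h(\vec x,y)(z)\, g(\vec x,y,z)(w)$; minimization $\mu f(\vec x)(y)=f(\vec x,y)(0)\prod_{z<y}\sum_{k>0}f(\vec x,z)(k)$. $\mathscr{PR}$ is the smallest class of PFs containing the basic PFs and closed under these three operations. PTMs: Turing machines with tape alphabet $\Sigma_b\supseteq\{0,1\}$ plus blank, states $Q$, initial $q_s$, final states $Q_f$, and two transition functions $\delta_0,\delta_1$ on non-final configurations, each applied with probability $1/2$; configurations $\langle s,a,t,q\rangle$, initial configuration on $a\cdot v$ is $\langle\varepsilon,a,v,q_s\rangle$, final configuration with output $s$ is $\langle s,a,\varepsilon,q\rangle$, $q\in Q_f$. $\mathcal{IO}_M(s)(t)=\sum 2^{-|b|}$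 over choice sequences $b\in\{0,1\}^*$ that from the initial configuration on $s$ first reach a final configuration with output $t$ after exactly $|b|$ steps. With $n\mapsto\overline n$ the length-lexicographic bijection $\mathbb{N}\to\{0,1\}^*$ and $\langle\vec x\rangle$ a fixed computable string encoding of tuples, $\mathscr{PC}$ is the set of PFs $f$ with $f(\vec x)(y)=\mathcal{IO}_M(\langle\vec x\rangle)(\overline y)$ for some PTM $M$ and all $\vec x,y$. *)

From Stdlib Require Import Reals List FinFun ClassicalEpsilon.
From Stdlib Require Vector Fin.
Import ListNotations.
Open Scope R_scope.

(* The sum of a series (as a limit of partial sums, [infinite_sum]); all series
   used below have nonnegative terms and converge (value <= 1). *)
Definition nsum (f : nat -> R) : R :=
  epsilon (inhabits 0%R) (fun l => infinite_sum f l).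

(* A PF of arity k : N^k -> (pseudo)distributions on N. *)
Definition PF (k : nat) : Type := Vector.t nat k -> nat -> R.

Fixpoint sumvec (n : nat) : (Vector.t nat n -> R) -> R :=
  match n with
  | O => fun F => F (Vector.nil nat)
  | S n' => fun F => nsum (fun z => sumvec n' (fun v => F (Vector.cons nat z n' v)))
  end.

Fixpoint prodfin (n : nat) : (Fin.t n -> R) -> R :=
  match n with
  | O => fun _ => 1
  | S n' => fun a => a Fin.F1 * prodfin n' (fun i => a (Fin.FS i))
  end.

Fixpoint prodlt (y : nat) (a : nat -> R) : R :=
  match y with
  | O => 1
  | S y' => prodlt y' a * a y'
  end.

Definition zeroPF : PF 1 := fun _ y => if Nat.eqb y 0 then 1 else 0.
Definition succPF : PF 1 := fun v y => if Nat.eqb y (S (Vector.hd v)) then 1 else 0.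
Definition projPF (n : nat) (m : Fin.t n) : PF n :=
  fun v y => if Nat.eqb y (Vector.nth v m) then 1 else 0.
Definition randPF : PF 1 :=
  fun v y => if Nat.eqb y (Vector.hd v) then /2
             else if Nat.eqb y (S (Vector.hd v)) then /2 else 0.

Definition compPF {n k : nat} (f : PF n) (g : Fin.t n -> PF k) : PF k :=
  fun x y => sumvec n (fun zs => f zs y * prodfin n (fun i => g i x (Vector.nth zs i))).

Definition muPF {k : nat} (f : PF (S k)) : PF k :=
  fun x y => f (Vector.shiftin y x) 0%nat *
             prodlt y (fun z => nsum (fun j => f (Vector.shiftin z x) (S j))).

(** The class PR: smallest class containing the basic PFs, closed under
    composition, primitive recursion (h = rec(f,g), given by its defining
    equations) and minimization. *)
Inductive PR : forall k : nat, PF k -> Prop :=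
| PR_zero : PR 1 zeroPF
| PR_succ : PR 1 succPF
| PR_proj : forall (n : nat) (m : Fin.t n), PR n (projPF n m)
| PR_rand : PR 1 randPF
| PR_comp : forall (n k : nat) (f : PF n) (g : Fin.t n -> PF k),
    PR n f -> (forall i, PR k (g i)) -> PR k (compPF f g)
| PR_rec : forall (k : nat) (f : PF k) (g : PF (S (S k))) (h : PF (S k)),
    PR k f -> PR (S (S k)) g ->
    (forall x w, h (Vector.shiftin 0%nat x) w = f x w) ->
    (forall x y w, h (Vector.shiftin (S y) x) w =
        nsum (fun z => h (Vector.shiftin y x) z *
                       g (Vector.shiftin z (Vector.shiftin y x)) w)) ->
    PR (S k) h
| PR_mu : forall (k : nat) (f : PF (S k)), PR (S k) f -> PR k (muPF f).

Inductive Move : Type := MLeft | MRight.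

Record PTM : Type := {
  Sig : Type;
  St : Type;
  Sig_finite : FinFun.Finite Sig;
  St_finite : FinFun.Finite St;
  sym0 : Sig; sym1 : Sig; blank : Sig;
  syms_distinct : sym0 <> sym1 /\ sym0 <> blank /\ sym1 <> blank;
  qstart : St;
  final : St -> bool;
  delta : bool -> St -> Sig -> St * Sig * Move  (* δ_0, δ_1 *)
}.

(* configuration <s, a, t, q>: s = tape left of the head (left-to-right),
   a = scanned symbol, t = tape right of the head, q = state *)
Record config (M : PTM) : Type := mkConfig {
  cleft : list (Sig M); chead : Sig M; cright : list (Sig M); cstate : St M }.
Arguments mkConfig {M}. Arguments cleft {M}. Arguments chead {M}.
Arguments cright {M}. Arguments cstate {M}.

Definition step (M : PTM) (c : config M) (b : bool) : config M :=
  match delta M b (cstate c) (chead c) with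
  | (q', a', MRight) =>
      mkConfig (cleft c ++ [a']) (hd (blank M) (cright c)) (tl (cright c)) q'
  | (q', a', MLeft) =>
      mkConfig (removelast (cleft c)) (last (cleft c) (blank M)) (a' :: cright c) q'
  end.

Definition run (M : PTM) (bs : list bool) (c : config M) : config M :=
  fold_left (step M) bs c.

Definition bits_to_sig (M : PTM) (w : list bool) : list (Sig M) :=
  map (fun b : bool => if b then sym1 M else sym0 M) w.

Definition init (M : PTM) (w : list bool) : config M :=
  match bits_to_sig M w with
  | nil => mkConfig nil (blank M) nil (qstart M)
  | a :: v => mkConfig nil a v (qstart M)
  end.

Definition halts_with (M : PTM) (w : list bool) (bs : list bool) (out : list bool) : Prop :=
  (forall j, (j < length bs)%nat -> final M (cstate (run M (firstn j bs) (init M w))) = false) /\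
  final M (cstate (run M bs (init M w))) = true /\
  cleft (run M bs (init M w)) = bits_to_sig M out /\
  cright (run M bs (init M w)) = [].

Fixpoint bitlists (n : nat) : list (list bool) :=
  match n with
  | O => [[]]
  | S n' => flat_map (fun l => [false :: l; true :: l]) (bitlists n')
  end.

Definition IO (M : PTM) (w out : list bool) : R :=
  nsum (fun n => fold_right Rplus 0
    (map (fun bs => if excluded_middle_informative (halts_with M w bs out)
                    then (/2) ^ n else 0) (bitlists n))).

(** Length-lexicographic bijection N -> {0,1}^*: n ↦ binary of n+1 without its
    leading 1 (0 ↦ ε, 1 ↦ 0, 2 ↦ 1, 3 ↦ 00, ...). *)
Fixpoint pos_bits (p : positive) : list bool :=
  match p with
  | xH => []
  | xO p' => pos_bits p' ++ [false]
  | xI p' => pos_bits p' ++ [true]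
  end.
Definition nbar (n : nat) : list bool := pos_bits (Pos.of_succ_nat n).

Definition enc_tuple {k : nat} (x : Vector.t nat k) : list bool :=
  Vector.fold_right (fun n acc => flat_map (fun b => [b; b]) (nbar n) ++ [false; true] ++ acc) x [].

Definition PC (k : nat) (f : PF k) : Prop :=
  exists M : PTM, forall x y, f x y = IO M (enc_tuple x) (nbar y).

From Stdlib Require Import Reals.
From Stdlib Require Import PArith List Lia Lra Arith FunctionalExtensionality ClassicalEpsilon FinFun.
From Stdlib Require Vector Fin.
Import ListNotations.

(** On codes of configurations, one step of [M], the
    final-state test and the output test are primitive recursive, so the
    number [C(n, y)] of choice strings of length [n] along which [M] halts
    after exactly [n] steps with output [y] is a deterministic primitive
    recursive function of the input, [n] and [y].  Halting choice strings
    form a prefix-free set, hence [sum_z C(z) 2^-(n_z) <= 1], where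
    [z = <n_z, y_z>] runs through Cantor codes.  Minimisation then samples
    [z] with exactly these probabilities: at stage [z] it stops with hazard
    rate [C(z) 2^-(n_z) / (1 - mass of the earlier stages)], a rational
    number [A/B].  A coin of bias [A/B] is itself probabilistic recursive:
    draw a geometric [i] ([P(i) = 2^-(i+1)], minimisation over fair coins)
    and test the [i]-th binary digit of [A/B].  Projecting the sampled [z]
    to [y] finally sums the fibre [{<n, y> | n}], which is [IO_M]. *)

Local Open Scope R_scope.

(** * Series *)

Lemma nsum_spec (f : nat -> R) (l : R) : infinite_sum f l -> nsum f = l.
Proof.
  intro H. unfold nsum.
  assert (E : exists l, infinite_sum f l) by (exists l; exact H).
  pose proof (epsilon_spec (inhabits 0%R) (fun l => infinite_sum f l) E) as H2.
  simpl in H2. eapply uniqueness_sum; eauto.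
Qed.

Lemma nsum_ext_spec (f g : nat -> R) (l : R) :
  (forall i, f i = g i) -> infinite_sum g l -> nsum f = l.
Proof.
  intros E H. apply nsum_spec. replace f with g; [exact H|].
  apply functional_extensionality. intro i. symmetry. apply E.
Qed.

Lemma infinite_sum_Un_cv (f : nat -> R) (l : R) :
  infinite_sum f l <-> Un_cv (fun N => sum_f_R0 f N) l.
Proof. split; intros H eps Heps; destruct (H eps Heps) as [N HN]; exists N; exact HN. Qed.

Lemma infinite_sum_finite (f : nat -> R) (N : nat) :
  (forall n, (n > N)%nat -> f n = 0) -> infinite_sum f (sum_f_R0 f N).
Proof.
  intros H eps Heps. exists N. intros n Hn.
  assert (E : sum_f_R0 f n = sum_f_R0 f N).
  { induction Hn. reflexivity. simpl. rewrite IHHn, H by lia. ring. }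
  rewrite E. unfold R_dist. rewrite Rminus_diag, Rabs_R0. exact Heps.
Qed.

Lemma nsum_single (a : nat) (c : R) :
  nsum (fun n => if Nat.eqb n a then c else 0) = c.
Proof.
  set (f := fun n => if Nat.eqb n a then c else 0).
  assert (Hbelow : forall m, (m < a)%nat -> sum_f_R0 f m = 0).
  { induction m; intros.
    - unfold f; simpl. destruct a; [lia|reflexivity].
    - rewrite tech5, IHm by lia. unfold f. rewrite (proj2 (Nat.eqb_neq (S m) a)) by lia. ring. }
  assert (Ha : sum_f_R0 f a = c).
  { destruct a; [reflexivity|]. rewrite tech5, Hbelow by lia. unfold f. rewrite Nat.eqb_refl. ring. }
  apply nsum_spec. rewrite <- Ha.
  apply infinite_sum_finite. intros n Hn. unfold f. destruct (Nat.eqb_spec n a); [lia|auto].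
Qed.

Lemma nsum_zero : nsum (fun _ => 0) = 0.
Proof.
  transitivity (nsum (fun n => if Nat.eqb n 0 then 0 else 0)); [|apply nsum_single].
  f_equal. apply functional_extensionality. intros [|n]; reflexivity.
Qed.

Lemma infinite_sum_geom_rate (f : nat -> R) (l K : R) :
  0 <= K -> (forall N, Rabs (sum_f_R0 f N - l) <= K * (/2) ^ (S N)) -> infinite_sum f l.
Proof.
  intros HK H eps He.
  destruct (pow_lt_1_zero (/2) ltac:(rewrite Rabs_pos_eq; lra) (eps / (K + 1))) as [N HN].
  { apply Rdiv_lt_0_compat; lra. }
  exists N. intros n Hn. unfold R_dist.
  eapply Rle_lt_trans. apply H.
  specialize (HN (S n) ltac:(lia)). rewrite Rabs_pos_eq in HN by (apply pow_le; lra).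
  assert (0 <= (/2) ^ S n) by (apply pow_le; lra).
  apply Rmult_lt_compat_r with (r := K + 1) in HN; [|lra].
  unfold Rdiv in HN. rewrite Rmult_assoc, Rinv_l, Rmult_1_r in HN by lra. nra.
Qed.

Lemma sum_half_powers N : sum_f_R0 (fun i => (/2) ^ (S i)) N = 1 - (/2) ^ (S N).
Proof. induction N; simpl in *. field. rewrite IHN. field. Qed.

Lemma infinite_sum_half_powers : infinite_sum (fun i => (/2) ^ (S i)) 1.
Proof.
  apply (infinite_sum_geom_rate _ _ 1); [lra|]. intro N. rewrite sum_half_powers.
  replace (1 - (/ 2) ^ S N - 1) with (- (/2) ^ S N) by ring.
  rewrite Rabs_Ropp, Rabs_pos_eq by (apply pow_le; lra). lra.
Qed.

Lemma pow2_mul_inv m : 2 ^ m * (/2) ^ m = 1.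
Proof. rewrite <- Rpow_mult_distr, Rinv_r, pow1; lra. Qed.

(** * Deterministic probabilistic recursive functions *)

Fixpoint vec_of_fun (n : nat) : (Fin.t n -> nat) -> Vector.t nat n :=
  match n with
  | O => fun _ => Vector.nil nat
  | S n' => fun a => Vector.cons nat (a Fin.F1) n' (vec_of_fun n' (fun i => a (Fin.FS i)))
  end.

Lemma vec_of_fun_nth n (v : Vector.t nat n) : vec_of_fun n (fun i => Vector.nth v i) = v.
Proof. induction v; simpl; f_equal; auto. Qed.

Lemma to_list_vec_of_fun (m : nat) (G : nat -> nat) :
  Vector.to_list (vec_of_fun m (fun i => G (proj1_sig (Fin.to_nat i)))) = map G (seq 0 m).
Proof.
  revert G. induction m; intro G; [reflexivity|].
  simpl vec_of_fun. rewrite VectorSpec.to_list_cons.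
  transitivity (G 0%nat :: Vector.to_list
                  (vec_of_fun m (fun i => (fun j => G (S j)) (proj1_sig (Fin.to_nat i))))).
  { do 3 f_equal. apply functional_extensionality; intro i. destruct (Fin.to_nat i). reflexivity. }
  rewrite (IHm (fun j => G (S j))). simpl. f_equal. rewrite <- seq_shift, map_map. reflexivity.
Qed.

Lemma to_list_shiftin (k : nat) (x : Vector.t nat k) (y : nat) :
  Vector.to_list (Vector.shiftin y x) = Vector.to_list x ++ [y].
Proof.
  induction x; [reflexivity|].
  change (Vector.shiftin y (Vector.cons nat h n x)) with (Vector.cons nat h (S n) (Vector.shiftin y x)).
  rewrite !VectorSpec.to_list_cons, IHx. reflexivity.
Qed.

Lemma sumvec_S n F : sumvec (S n) F = nsum (fun z => sumvec n (fun v => F (Vector.cons nat z n v))).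
Proof. reflexivity. Qed.

Lemma prodfin_S n a : prodfin (S n) a = a Fin.F1 * prodfin n (fun i => a (Fin.FS i)).
Proof. reflexivity. Qed.

Lemma sumvec_dirac (n : nat) (H : Vector.t nat n -> R) (a : Fin.t n -> nat) :
  sumvec n (fun zs => H zs * prodfin n (fun i => if Nat.eqb (Vector.nth zs i) (a i) then 1 else 0))
  = H (vec_of_fun n a).
Proof.
  revert H a. induction n; intros H a; simpl; [ring|].
  rewrite <- (nsum_single (a Fin.F1)). f_equal. apply functional_extensionality. intro z.
  pose proof (IHn (fun v => H (Vector.cons nat z n v) * (if Nat.eqb z (a Fin.F1) then 1 else 0))
             (fun i => a (Fin.FS i))) as E.
  simpl in E.
  transitivity (H (Vector.cons nat z n (vec_of_fun n (fun i => a (Fin.FS i))))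
                * (if Nat.eqb z (a Fin.F1) then 1 else 0)).
  - rewrite <- E. f_equal. apply functional_extensionality. intro v. ring.
  - destruct (Nat.eqb_spec z (a Fin.F1)); [subst; ring | ring].
Qed.

Definition detPF {k : nat} (F : Vector.t nat k -> nat) : PF k :=
  fun x y => if Nat.eqb y (F x) then 1 else 0.

(** Deterministic functions are given on lists; only lists of length [k] matter. *)
Definition PRdet (k : nat) (F : list nat -> nat) : Prop :=
  PR k (detPF (fun x => F (Vector.to_list x))).

Lemma PRdet_ext (k : nat) (F G : list nat -> nat) :
  (forall l, length l = k -> F l = G l) -> PRdet k F -> PRdet k G.
Proof.
  unfold PRdet. intros E H.
  replace (detPF (fun x : Vector.t nat k => G (Vector.to_list x)))
    with (detPF (fun x : Vector.t nat k => F (Vector.to_list x))); auto.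
  unfold detPF. apply functional_extensionality; intro x.
  rewrite E; auto. apply VectorSpec.length_to_list.
Qed.

(** [0] is obtained as [mu z], whose test succeeds at once. *)
Lemma PRdet_zero (k : nat) : PRdet k (fun _ => 0%nat).
Proof.
  unfold PRdet.
  assert (E : detPF (fun _ : Vector.t nat k => 0%nat) =
              compPF (n:=0) (muPF zeroPF) (fun i => Fin.case0 (fun _ => PF k) i)).
  { unfold detPF, compPF, muPF. apply functional_extensionality; intro x.
    apply functional_extensionality; intro y. simpl. unfold zeroPF. simpl.
    assert (Hfail : forall y (a : nat -> R), (forall z, a z = 0) ->
                    prodlt y a = if Nat.eqb y 0 then 1 else 0).
    { intros y0 a Ha. induction y0; [reflexivity|]. simpl. rewrite IHy0, Ha. destruct y0; simpl; ring. }
    rewrite Hfail by (intro; apply nsum_zero). destruct y; simpl; ring. }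
  rewrite E. apply PR_comp; [apply PR_mu, PR_zero | intro i; inversion i].
Qed.

Lemma PRdet_comp (m k : nat) (Op : list nat -> nat) (Fi : nat -> list nat -> nat) :
  PRdet m Op -> (forall i, (i < m)%nat -> PRdet k (Fi i)) ->
  PRdet k (fun l => Op (map (fun i => Fi i l) (seq 0 m))).
Proof.
  intros HO HF. unfold PRdet in *.
  set (g := fun i : Fin.t m =>
         detPF (fun x : Vector.t nat k => Fi (proj1_sig (Fin.to_nat i)) (Vector.to_list x))).
  assert (E : detPF (fun x : Vector.t nat k => Op (map (fun i => Fi i (Vector.to_list x)) (seq 0 m)))
              = compPF (detPF (fun x : Vector.t nat m => Op (Vector.to_list x))) g).
  { apply functional_extensionality; intro x. apply functional_extensionality; intro y.
    unfold compPF, g, detPF.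
    rewrite (sumvec_dirac m (fun zs => if Nat.eqb y (Op (Vector.to_list zs)) then 1 else 0)).
    rewrite (to_list_vec_of_fun m (fun i => Fi i (Vector.to_list x))). reflexivity. }
  rewrite E. apply PR_comp; [exact HO|].
  intro i. apply HF. destruct (Fin.to_nat i). simpl. exact l.
Qed.

Lemma PRdet_var (k i : nat) : PRdet k (fun l => nth i l 0%nat).
Proof.
  destruct (Nat.lt_ge_cases i k) as [H|H].
  - unfold PRdet.
    replace (detPF (fun x : Vector.t nat k => nth i (Vector.to_list x) 0%nat)) with (projPF k (Fin.of_nat_lt H)).
    { apply PR_proj. }
    unfold projPF, detPF. apply functional_extensionality; intro x. apply functional_extensionality; intro y.
    rewrite <- (VectorSpec.to_list_nth_order _ _ x i H). reflexivity.
  - eapply PRdet_ext; [|apply PRdet_zero]. intros l Hl. simpl. rewrite nth_overflow by lia. reflexivity.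
Qed.

Local Open Scope nat_scope.

Lemma map_nth_seq_firstn (k : nat) (l : list nat) :
  k <= length l -> map (fun i => nth i l 0) (seq 0 k) = firstn k l.
Proof.
  revert l. induction k; intros l H; [reflexivity|].
  destruct l as [|a l]; simpl in H; [lia|].
  simpl. f_equal. rewrite <- seq_shift, map_map. apply IHk. lia.
Qed.

Lemma firstn_app_length (l l' : list nat) (k : nat) : length l = k -> firstn k (l ++ l') = l.
Proof. intro H. subst. rewrite firstn_app, Nat.sub_diag, firstn_all. simpl. apply app_nil_r. Qed.

Lemma PRdet_comp_list (m k : nat) (Op : list nat -> nat) (Fs : list (list nat -> nat)) :
  length Fs = m -> PRdet m Op -> (forall F, In F Fs -> PRdet k F) ->
  PRdet k (fun l => Op (map (fun F => F l) Fs)).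
Proof.
  intros Hl HO HF.
  pose proof (PRdet_comp m k Op (fun i l => nth i Fs (fun _ => 0) l) HO) as H.
  eapply PRdet_ext; [|apply H].
  - intros l _. cbv beta. f_equal. subst m. clear HF HO H. induction Fs as [|a Fs IH]; [reflexivity|].
    simpl. f_equal. rewrite <- seq_shift, map_map. exact IH.
  - intros i Hi. apply HF, nth_In. lia.
Qed.

Lemma PRdet_op1 k (f : nat -> nat) F :
  PRdet 1 (fun l => f (nth 0 l 0)) -> PRdet k F -> PRdet k (fun l => f (F l)).
Proof.
  intros Hf HF. eapply PRdet_ext; [|apply (PRdet_comp_list 1 k _ [F] eq_refl Hf)]; [reflexivity|].
  intros G [<-|[]]; auto.
Qed.

Lemma PRdet_op2 k (f : nat -> nat -> nat) F G :
  PRdet 2 (fun l => f (nth 0 l 0) (nth 1 l 0)) -> PRdet k F -> PRdet k G ->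
  PRdet k (fun l => f (F l) (G l)).
Proof.
  intros Hf HF HG. eapply PRdet_ext; [|apply (PRdet_comp_list 2 k _ [F; G] eq_refl Hf)]; [reflexivity|].
  intros H [<-|[<-|[]]]; auto.
Qed.

Lemma PRdet_op3 k (f : nat -> nat -> nat -> nat) F G H :
  PRdet 3 (fun l => f (nth 0 l 0) (nth 1 l 0) (nth 2 l 0)) -> PRdet k F -> PRdet k G -> PRdet k H ->
  PRdet k (fun l => f (F l) (G l) (H l)).
Proof.
  intros Hf HF HG HH. eapply PRdet_ext; [|apply (PRdet_comp_list 3 k _ [F; G; H] eq_refl Hf)]; [reflexivity|].
  intros I [<-|[<-|[<-|[]]]]; auto.
Qed.

Lemma PRdet_weaken k m F : k <= m -> PRdet k F -> PRdet m (fun l => F (firstn k l)).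
Proof.
  intros Hkm HF.
  eapply PRdet_ext; [|exact (PRdet_comp k m F (fun i l => nth i l 0) HF (fun i _ => PRdet_var m i))].
  intros l Hl. cbv beta. f_equal. apply map_nth_seq_firstn. lia.
Qed.

Lemma PRdet_succ (k : nat) (F : list nat -> nat) : PRdet k F -> PRdet k (fun l => S (F l)).
Proof.
  apply PRdet_op1. unfold PRdet.
  replace (detPF (fun x : Vector.t nat 1 => S (nth 0 (Vector.to_list x) 0))) with succPF; [apply PR_succ|].
  unfold succPF, detPF. apply functional_extensionality; intro x. apply functional_extensionality; intro y.
  rewrite (VectorSpec.to_list_hd _ _ x 0). destruct (Vector.to_list x); reflexivity.
Qed.

Lemma PRdet_const (k c : nat) : PRdet k (fun _ => c).
Proof. induction c; [apply PRdet_zero | exact (PRdet_succ k (fun _ => c) IHc)]. Qed.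

Fixpoint primrec (b : nat) (s : nat -> nat -> nat) (n : nat) : nat :=
  match n with O => b | S y => s y (primrec b s y) end.

Lemma PRdet_rec_last k (B : list nat -> nat) (s : list nat -> nat -> nat -> nat) :
  PRdet k B -> PRdet (S (S k)) (fun l => s (firstn k l) (nth k l 0) (nth (S k) l 0)) ->
  PRdet (S k) (fun l => primrec (B (firstn k l)) (s (firstn k l)) (last l 0)).
Proof.
  intros HB HS. set (h := fun l => primrec (B (firstn k l)) (s (firstn k l)) (last l 0)).
  assert (Hstep : forall l y r, length l = k ->
            s (firstn k (l ++ [y; r])) (nth k (l ++ [y; r]) 0) (nth (S k) (l ++ [y; r]) 0) = s l y r).
  { intros l y r Hl. rewrite firstn_app_length by exact Hl.
    rewrite !app_nth2 by lia. rewrite Hl, Nat.sub_diag. replace (S k - k) with 1 by lia. reflexivity. }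
  unfold PRdet. eapply (PR_rec k _ _ _ HB HS).
  - intros x w. unfold detPF, h. rewrite to_list_shiftin, last_last.
    rewrite firstn_app_length by apply VectorSpec.length_to_list. reflexivity.
  - intros x y w. set (r := h (Vector.to_list (Vector.shiftin y x))).
    set (g := detPF (fun v : Vector.t nat (S (S k)) => s (firstn k (Vector.to_list v))
                       (nth k (Vector.to_list v) 0) (nth (S k) (Vector.to_list v) 0))).
    transitivity (nsum (fun z => if z =? r then g (Vector.shiftin r (Vector.shiftin y x)) w else 0)%R).
    + rewrite nsum_single. unfold g, detPF, r, h. rewrite !to_list_shiftin, <- app_assoc. simpl app.
      rewrite Hstep by apply VectorSpec.length_to_list.
      rewrite !firstn_app_length, !last_last by apply VectorSpec.length_to_list.
      reflexivity.
    + f_equal. apply functional_extensionality; intro z. unfold detPF at 1. fold r.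
      destruct (Nat.eqb_spec z r); [subst; ring | ring].
Qed.

Lemma PRdet_rec k (B N : list nat -> nat) (s : list nat -> nat -> nat -> nat) :
  PRdet k B -> PRdet k N -> PRdet (S (S k)) (fun l => s (firstn k l) (nth k l 0) (nth (S k) l 0)) ->
  PRdet k (fun l => primrec (B l) (s l) (N l)).
Proof.
  intros HB HN HS.
  eapply PRdet_ext; [|apply (PRdet_comp (S k) k _ (fun i l => if i <? k then nth i l 0 else N l)
                                                (PRdet_rec_last k B s HB HS))].
  - intros l Hl. rewrite seq_S, map_app. simpl. rewrite Nat.ltb_irrefl, last_last.
    replace (map (fun i => if i <? k then nth i l 0 else N l) (seq 0 k))
      with (map (fun i => nth i l 0) (seq 0 k)).
    + rewrite map_nth_seq_firstn by lia.
      rewrite <- Hl, firstn_all, firstn_app_length by reflexivity. reflexivity.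
    + apply map_ext_in. intros a Ha. apply in_seq in Ha.
      replace (a <? k) with true by (symmetry; apply Nat.ltb_lt; lia). reflexivity.
  - intros i Hi. destruct (i <? k); [apply PRdet_var | exact HN].
Qed.

Lemma PRdet_iter k (S0 N : list nat -> nat) (st : list nat -> nat -> nat) :
  PRdet k S0 -> PRdet k N -> PRdet (S k) (fun l => st (firstn k l) (nth k l 0)) ->
  PRdet k (fun l => Nat.iter (N l) (st l) (S0 l)).
Proof.
  intros H0 HN HS.
  eapply PRdet_ext with (F := fun l => primrec (S0 l) (fun _ h => st l h) (N l)).
  { intros l _. induction (N l); simpl; congruence. }
  apply PRdet_rec; auto.
  eapply PRdet_ext;
    [|apply (PRdet_comp (S k) (S (S k)) _ (fun i l => if i <? k then nth i l 0 else nth (S k) l 0) HS)].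
  - intros l Hl. rewrite seq_S, map_app. simpl map at 2. rewrite Nat.ltb_irrefl.
    rewrite firstn_app_length by (rewrite length_map, length_seq; auto).
    rewrite app_nth2, length_map, length_seq, Nat.sub_diag by (rewrite length_map, length_seq; auto).
    f_equal.
    + rewrite <- map_nth_seq_firstn by lia.
      apply map_ext_in. intros a Ha. apply in_seq in Ha.
      replace (a <? k) with true by (symmetry; apply Nat.ltb_lt; lia). reflexivity.
    + simpl. rewrite Nat.ltb_irrefl. reflexivity.
  - intros i Hi. destruct (i <? k); apply PRdet_var.
Qed.

(** * Primitive recursive arithmetic *)

Lemma PRdet_add k F G : PRdet k F -> PRdet k G -> PRdet k (fun l => F l + G l).
Proof.
  apply (PRdet_op2 k Nat.add).
  apply (PRdet_ext _ (fun l => primrec (nth 0 l 0) (fun _ h => S h) (nth 1 l 0))).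
  { intros l _. induction (nth 1 l 0); simpl; lia. }
  apply (PRdet_rec 2 _ _ (fun _ _ h => S h)); [apply PRdet_var | apply PRdet_var |].
  apply PRdet_succ, PRdet_var.
Qed.

Lemma PRdet_mul k F G : PRdet k F -> PRdet k G -> PRdet k (fun l => F l * G l).
Proof.
  apply (PRdet_op2 k Nat.mul).
  apply (PRdet_ext _ (fun l => primrec 0 (fun _ h => h + nth 0 l 0) (nth 1 l 0))).
  { intros l _. induction (nth 1 l 0); simpl; lia. }
  apply (PRdet_rec 2 (fun _ => 0) _ (fun l _ h => h + nth 0 l 0)); [apply PRdet_const | apply PRdet_var |].
  apply PRdet_add; [apply PRdet_var|].
  eapply PRdet_ext; [|apply (PRdet_var 4 0)].
  intros l Hl. do 2 (destruct l as [|? l]; simpl in *; [lia|]). reflexivity.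
Qed.

Lemma PRdet_pred k F : PRdet k F -> PRdet k (fun l => pred (F l)).
Proof.
  apply (PRdet_op1 k pred).
  apply (PRdet_ext _ (fun l => primrec 0 (fun y _ => y) (nth 0 l 0))).
  { intros l _. destruct (nth 0 l 0); reflexivity. }
  apply (PRdet_rec 1 (fun _ => 0) _ (fun _ y _ => y)); [apply PRdet_const | apply PRdet_var | apply PRdet_var].
Qed.

Lemma PRdet_sub k F G : PRdet k F -> PRdet k G -> PRdet k (fun l => F l - G l).
Proof.
  apply (PRdet_op2 k Nat.sub).
  apply (PRdet_ext _ (fun l => primrec (nth 0 l 0) (fun _ h => pred h) (nth 1 l 0))).
  { intros l _. induction (nth 1 l 0); simpl; lia. }
  apply (PRdet_rec 2 _ _ (fun _ _ h => pred h)); [apply PRdet_var | apply PRdet_var |].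
  apply PRdet_pred, PRdet_var.
Qed.

Definition ifz (c a b : nat) : nat := match c with O => a | S _ => b end.

Lemma PRdet_ifz k C A B : PRdet k C -> PRdet k A -> PRdet k B -> PRdet k (fun l => ifz (C l) (A l) (B l)).
Proof.
  apply (PRdet_op3 k ifz).
  apply (PRdet_ext _ (fun l => primrec (nth 1 l 0) (fun _ _ => nth 2 l 0) (nth 0 l 0))).
  { intros l _. destruct (nth 0 l 0); reflexivity. }
  apply (PRdet_rec 3 _ _ (fun l _ _ => nth 2 l 0)); [apply PRdet_var | apply PRdet_var |].
  eapply PRdet_ext; [|apply (PRdet_var 5 2)].
  intros l Hl. do 3 (destruct l as [|? l]; simpl in *; [lia|]). reflexivity.
Qed.

Lemma PRdet_if_leb k A B X Y : PRdet k A -> PRdet k B -> PRdet k X -> PRdet k Y ->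
  PRdet k (fun l => if A l <=? B l then X l else Y l).
Proof.
  intros. eapply PRdet_ext; [|apply (PRdet_ifz k (fun l => A l - B l) X Y); [apply PRdet_sub| |]; eauto].
  intros l _. simpl. destruct (Nat.leb_spec (A l) (B l)).
  - replace (A l - B l) with 0 by lia. reflexivity.
  - destruct (A l - B l) eqn:E; [lia|reflexivity].
Qed.

Lemma PRdet_if_eqb k A B X Y : PRdet k A -> PRdet k B -> PRdet k X -> PRdet k Y ->
  PRdet k (fun l => if A l =? B l then X l else Y l).
Proof.
  intros. eapply PRdet_ext;
    [|apply (PRdet_ifz k (fun l => (A l - B l) + (B l - A l)) X Y); [apply PRdet_add; apply PRdet_sub| |]; eauto].
  intros l _. simpl. destruct (Nat.eqb_spec (A l) (B l)) as [->|].
  - rewrite Nat.sub_diag. reflexivity.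
  - destruct (A l - B l + (B l - A l)) eqn:E; [lia|reflexivity].
Qed.

Lemma PRdet_mod2 k F : PRdet k F -> PRdet k (fun l => F l mod 2).
Proof.
  apply (PRdet_op1 k (fun a => a mod 2)).
  apply (PRdet_ext _ (fun l => primrec 0 (fun _ h => 1 - h) (nth 0 l 0))).
  { intros l _. induction (nth 0 l 0) as [|a IH]; [reflexivity|]. cbn [primrec]. rewrite IH.
    pose proof (Nat.div_mod_eq a 2). pose proof (Nat.div_mod_eq (S a) 2).
    pose proof (Nat.mod_upper_bound a 2). pose proof (Nat.mod_upper_bound (S a) 2). lia. }
  apply (PRdet_rec 1 (fun _ => 0) _ (fun _ _ h => 1 - h)); [apply PRdet_const | apply PRdet_var |].
  apply PRdet_sub; [apply PRdet_const | apply PRdet_var].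
Qed.

Lemma PRdet_div2 k F : PRdet k F -> PRdet k (fun l => F l / 2).
Proof.
  apply (PRdet_op1 k (fun a => a / 2)).
  apply (PRdet_ext _ (fun l => primrec 0 (fun y h => h + y mod 2) (nth 0 l 0))).
  { intros l _. induction (nth 0 l 0) as [|a IH]; [reflexivity|]. cbn [primrec]. rewrite IH.
    pose proof (Nat.div_mod_eq a 2). pose proof (Nat.div_mod_eq (S a) 2).
    pose proof (Nat.mod_upper_bound a 2). pose proof (Nat.mod_upper_bound (S a) 2). lia. }
  apply (PRdet_rec 1 (fun _ => 0) _ (fun _ y h => h + y mod 2)); [apply PRdet_const | apply PRdet_var |].
  apply PRdet_add; [apply PRdet_var | apply PRdet_mod2, PRdet_var].
Qed.

Lemma PRdet_pow2 k F : PRdet k F -> PRdet k (fun l => 2 ^ (F l)).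
Proof.
  apply (PRdet_op1 k (fun a => 2 ^ a)).
  apply (PRdet_ext _ (fun l => primrec 1 (fun _ h => h + h) (nth 0 l 0))).
  { intros l _. induction (nth 0 l 0); simpl; lia. }
  apply (PRdet_rec 1 (fun _ => 1) _ (fun _ _ h => h + h)); [apply PRdet_const | apply PRdet_var |].
  apply PRdet_add; apply PRdet_var.
Qed.

Lemma PRdet_table k (T : nat -> nat) (N : nat) (F : list nat -> nat) :
  PRdet k F -> PRdet k (fun l => if F l <? N then T (F l) else 0).
Proof.
  intro HF. induction N.
  - eapply PRdet_ext; [|apply PRdet_const]. intros. simpl. destruct (F l); reflexivity.
  - eapply PRdet_ext;
      [|apply (PRdet_if_eqb k F (fun _ => N) (fun _ => T N) _ HF (PRdet_const _ _) (PRdet_const _ _) IHN)].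
    intros l _. cbv beta. destruct (Nat.eqb_spec (F l) N) as [->|].
    + rewrite (proj2 (Nat.ltb_lt N (S N))) by lia. reflexivity.
    + destruct (Nat.ltb_spec (F l) N); destruct (Nat.ltb_spec (F l) (S N)); try lia; reflexivity.
Qed.

Fixpoint bsum (n : nat) (f : nat -> nat) : nat :=
  match n with O => 0 | S m => bsum m f + f m end.

Lemma PRdet_bsum k (N : list nat -> nat) (f : list nat -> nat -> nat) :
  PRdet k N -> PRdet (S k) (fun l => f (firstn k l) (nth k l 0)) ->
  PRdet k (fun l => bsum (N l) (f l)).
Proof.
  intros HN Hf.
  apply (PRdet_ext _ (fun l => primrec 0 (fun y h => h + f l y) (N l))).
  { intros l _. induction (N l); simpl; congruence. }
  apply PRdet_rec; [apply PRdet_const | exact HN |].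
  apply PRdet_add; [apply PRdet_var|].
  eapply PRdet_ext; [|exact (PRdet_weaken (S k) (S (S k)) _ ltac:(lia) Hf)].
  intros l Hl. cbv beta.
  rewrite firstn_firstn, nth_firstn, Nat.min_l by lia.
  rewrite (proj2 (Nat.ltb_lt k (S k))) by lia. reflexivity.
Qed.

(** * Cantor pairing *)

Fixpoint tri (s : nat) : nat := match s with O => 0 | S s' => tri s' + S s' end.

Lemma tri_mono a b : a <= b -> tri a <= tri b.
Proof. induction 1; simpl; lia. Qed.

Lemma le_tri s : s <= tri s.
Proof. induction s; simpl; lia. Qed.

(** The index of the Cantor diagonal containing [z]. *)
Definition cdiag (z : nat) : nat :=
  primrec 0 (fun y h => if tri (S h) <=? S y then S h else h) z.

Lemma cdiag_spec z : tri (cdiag z) <= z < tri (S (cdiag z)).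
Proof.
  induction z; [simpl; lia|].
  change (cdiag (S z)) with (if tri (S (cdiag z)) <=? S z then S (cdiag z) else cdiag z).
  destruct (Nat.leb_spec (tri (S (cdiag z))) (S z)); [|lia].
  split; [auto|]. change (tri (S (S (cdiag z)))) with (tri (S (cdiag z)) + S (S (cdiag z))). lia.
Qed.

Lemma cdiag_unique s z : tri s <= z < tri (S s) -> cdiag z = s.
Proof.
  intros H. pose proof (cdiag_spec z).
  destruct (Nat.lt_trichotomy (cdiag z) s) as [L|[L|L]]; auto.
  - pose proof (tri_mono (S (cdiag z)) s L). lia.
  - pose proof (tri_mono (S s) (cdiag z) L). lia.
Qed.

Definition cpair (a b : nat) : nat := tri (a + b) + b.
Definition csnd (z : nat) : nat := z - tri (cdiag z).
Definition cfst (z : nat) : nat := cdiag z - csnd z.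

Lemma cdiag_pair a b : cdiag (cpair a b) = a + b.
Proof. apply cdiag_unique. unfold cpair. simpl. lia. Qed.

Lemma csnd_pair a b : csnd (cpair a b) = b.
Proof. unfold csnd. rewrite cdiag_pair. unfold cpair. lia. Qed.

Lemma cfst_pair a b : cfst (cpair a b) = a.
Proof. unfold cfst. rewrite csnd_pair, cdiag_pair. lia. Qed.

Lemma cpair_surj z : cpair (cfst z) (csnd z) = z.
Proof.
  pose proof (cdiag_spec z). unfold cpair, cfst, csnd. simpl in H.
  replace (cdiag z - (z - tri (cdiag z)) + (z - tri (cdiag z))) with (cdiag z) by lia. lia.
Qed.

Lemma cpair_mono a b a' b' : a <= a' -> b <= b' -> cpair a b <= cpair a' b'.
Proof. intros. unfold cpair. pose proof (tri_mono (a + b) (a' + b')). lia. Qed.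

Lemma cfst_le z : cfst z <= z.
Proof.
  rewrite <- (cpair_surj z) at 2. unfold cpair. pose proof (le_tri (cfst z + csnd z)). lia.
Qed.

Ltac cpair_simpl := repeat (rewrite cfst_pair || rewrite csnd_pair).

Lemma PRdet_tri k F : PRdet k F -> PRdet k (fun l => tri (F l)).
Proof.
  apply (PRdet_op1 k tri).
  apply (PRdet_ext _ (fun l => primrec 0 (fun y h => h + S y) (nth 0 l 0))).
  { intros l _. induction (nth 0 l 0); simpl; congruence. }
  apply (PRdet_rec 1 (fun _ => 0) _ (fun _ y h => h + S y)); [apply PRdet_const | apply PRdet_var |].
  apply PRdet_add; [apply PRdet_var | apply PRdet_succ, PRdet_var].
Qed.

Lemma PRdet_cdiag k F : PRdet k F -> PRdet k (fun l => cdiag (F l)).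
Proof.
  apply (PRdet_op1 k cdiag). unfold cdiag.
  apply (PRdet_rec 1 (fun _ => 0) _ (fun _ y h => if tri (S h) <=? S y then S h else h));
    [apply PRdet_const | apply PRdet_var |].
  apply PRdet_if_leb; [apply PRdet_tri | | |]; repeat apply PRdet_succ; apply PRdet_var.
Qed.

Lemma PRdet_csnd k F : PRdet k F -> PRdet k (fun l => csnd (F l)).
Proof. intro. unfold csnd. apply PRdet_sub; [|apply PRdet_tri, PRdet_cdiag]; auto. Qed.

Lemma PRdet_cfst k F : PRdet k F -> PRdet k (fun l => cfst (F l)).
Proof. intro. unfold cfst. apply PRdet_sub; [apply PRdet_cdiag | apply PRdet_csnd]; auto. Qed.

Lemma PRdet_cpair k F G : PRdet k F -> PRdet k G -> PRdet k (fun l => cpair (F l) (G l)).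
Proof. intros. unfold cpair. apply PRdet_add; [apply PRdet_tri, PRdet_add|]; auto. Qed.

Ltac prdet := repeat first
  [ apply PRdet_mod2 | apply PRdet_div2 | apply PRdet_table | apply PRdet_cpair | apply PRdet_cfst
  | apply PRdet_csnd | apply PRdet_add | apply PRdet_mul | apply PRdet_sub | apply PRdet_pred | apply PRdet_ifz
  | apply PRdet_if_eqb | apply PRdet_if_leb | apply PRdet_pow2 | apply PRdet_tri | apply PRdet_succ
  | apply PRdet_var | apply PRdet_const ].

Local Open Scope nat_scope.

Lemma bsum_ext n f g : (forall i, i < n -> f i = g i) -> bsum n f = bsum n g.
Proof.
  induction n; intros H; simpl; [reflexivity|].
  rewrite H, IHn by (intros; try apply H; lia). reflexivity.
Qed.

Lemma bsum_le n f g : (forall i, i < n -> f i <= g i) -> bsum n f <= bsum n g.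
Proof.
  induction n; intros H; simpl; [lia|].
  pose proof (H n ltac:(lia)). specialize (IHn ltac:(intros; apply H; lia)). lia.
Qed.

Lemma bsum_add m n f : bsum (m + n) f = bsum m f + bsum n (fun i => f (m + i)).
Proof. induction n; simpl; [rewrite Nat.add_0_r; lia|]. rewrite Nat.add_succ_r. simpl. rewrite IHn. lia. Qed.

Lemma bsum_plus n f g : bsum n (fun i => f i + g i) = bsum n f + bsum n g.
Proof. induction n; simpl; lia. Qed.

Lemma bsum_scal n c f : bsum n (fun i => c * f i) = c * bsum n f.
Proof. induction n; simpl; lia. Qed.

Lemma bsum_const n c : bsum n (fun _ => c) = n * c.
Proof. induction n; simpl; lia. Qed.

Lemma bsum_double m f : bsum (2 * m) f = bsum m (fun i => f (2 * i)) + bsum m (fun i => f (2 * i + 1)).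
Proof.
  induction m; [reflexivity|].
  replace (2 * S m) with (S (S (2 * m))) by lia.
  change (bsum (S (S (2 * m))) f) with (bsum (2 * m) f + f (2 * m) + f (S (2 * m))).
  change (bsum (S m) (fun i => f (2 * i))) with (bsum m (fun i => f (2 * i)) + f (2 * m)).
  change (bsum (S m) (fun i => f (2 * i + 1))) with (bsum m (fun i => f (2 * i + 1)) + f (2 * m + 1)).
  rewrite IHm. replace (2 * m + 1) with (S (2 * m)) by lia. lia.
Qed.

Lemma bsum_mul_mod a b f : 0 < a -> bsum (a * b) (fun t => f (t mod a)) = b * bsum a f.
Proof.
  intro Ha. induction b; [rewrite Nat.mul_0_r; reflexivity|].
  replace (a * S b) with (a * b + a) by lia. rewrite bsum_add, IHb.
  rewrite (bsum_ext a (fun i => f ((a * b + i) mod a)) f); [lia|].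
  intros i Hi. f_equal. rewrite Nat.add_comm, Nat.mul_comm, Nat.Div0.mod_add. apply Nat.mod_small, Hi.
Qed.

Lemma bsum_swap m n f : bsum m (fun i => bsum n (fun j => f i j)) = bsum n (fun j => bsum m (fun i => f i j)).
Proof.
  induction m; simpl; [induction n; simpl; lia|].
  rewrite IHm, <- bsum_plus. reflexivity.
Qed.

Lemma bsum_atmost1 n f : (forall i, i < n -> f i <= 1) ->
  (forall i j, i < n -> j < n -> f i <> 0 -> f j <> 0 -> i = j) -> bsum n f <= 1.
Proof.
  induction n; intros H1 H2; simpl; [lia|].
  destruct (Nat.eq_dec (f n) 0) as [E|E].
  - rewrite E, Nat.add_0_r. apply IHn; intros; [apply H1 | apply H2]; auto; lia.
  - assert (Hbelow : bsum n f <= bsum n (fun _ => 0)).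
    { apply bsum_le. intros i Hi. destruct (Nat.eq_dec (f i) 0) as [|Ei]; [lia|].
      specialize (H2 i n ltac:(lia) ltac:(lia) Ei E). lia. }
    rewrite bsum_const in Hbelow. pose proof (H1 n). lia.
Qed.

Fixpoint bits_of (t n : nat) : list bool :=
  match n with O => [] | S n' => (t mod 2 =? 1) :: bits_of (t / 2) n' end.

Lemma b2n_mod2 t : Nat.b2n (t mod 2 =? 1) = t mod 2.
Proof. pose proof (Nat.mod_upper_bound t 2). destruct (t mod 2) as [|[|]]; simpl; lia. Qed.

Lemma length_bits_of t n : length (bits_of t n) = n.
Proof. revert t; induction n; simpl; auto. Qed.

Lemma bits_of_double t n b : bits_of (2 * t + Nat.b2n b) (S n) = b :: bits_of t n.
Proof.
  cbn [bits_of]. f_equal.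
  - assert (Hm : (2 * t + Nat.b2n b) mod 2 = Nat.b2n b)
      by (symmetry; apply Nat.mod_unique with t; destruct b; simpl; lia).
    rewrite Hm. destruct b; reflexivity.
  - f_equal. symmetry. apply Nat.div_unique with (Nat.b2n b); destruct b; simpl; lia.
Qed.

Lemma bits_of_mod t n z : n <= z -> bits_of (t mod 2 ^ n) n = firstn n (bits_of t z).
Proof.
  revert t z. induction n; intros t z Hz; [reflexivity|].
  destruct z as [|z]; [lia|]. cbn [bits_of firstn].
  assert (E : t mod 2 ^ S n = t mod 2 + 2 * ((t / 2) mod 2 ^ n)).
  { rewrite Nat.pow_succ_r', Nat.Div0.mod_mul_r. reflexivity. }
  assert (E1 : (t mod 2 ^ S n) mod 2 = t mod 2).
  { rewrite E, Nat.mul_comm, Nat.Div0.mod_add. apply Nat.Div0.mod_mod. }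
  assert (E2 : (t mod 2 ^ S n) / 2 = (t / 2) mod 2 ^ n).
  { rewrite E, Nat.mul_comm, Nat.div_add by lia. rewrite Nat.div_small; [lia|].
    apply Nat.mod_upper_bound. lia. }
  rewrite E1, E2, (IHn _ z) by lia. reflexivity.
Qed.

Lemma pos_bits_inj p q : pos_bits p = pos_bits q -> p = q.
Proof.
  revert q. induction p; destruct q; simpl; intros H; try reflexivity;
  try (apply app_inj_tail in H; destruct H as [H1 H2]; try discriminate; f_equal; auto);
  try (destruct (pos_bits _); simpl in H; discriminate);
  try (symmetry in H; destruct (pos_bits _); simpl in H; discriminate).
Qed.

Lemma nbar_inj a b : nbar a = nbar b -> a = b.
Proof.
  unfold nbar. intro H. apply pos_bits_inj in H. apply (f_equal Pos.to_nat) in H.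
  rewrite !SuccNat2Pos.id_succ in H. lia.
Qed.

Definition indicator (P : Prop) : nat := if excluded_middle_informative P then 1 else 0.

Lemma indicator_le_1 P : indicator P <= 1.
Proof. unfold indicator. destruct (excluded_middle_informative P); lia. Qed.

Lemma indicator_neq0 P : indicator P <> 0 -> P.
Proof. unfold indicator. destruct (excluded_middle_informative P); auto. lia. Qed.

Fixpoint index_of {A : Type} (l : list A) (a : A) : nat :=
  match l with
  | [] => 0
  | b :: l' => if excluded_middle_informative (a = b) then 0 else S (index_of l' a)
  end.

Lemma index_of_spec {A} (l : list A) a :
  In a l -> nth_error l (index_of l a) = Some a /\ index_of l a < length l.
Proof.
  induction l as [|b l IH]; simpl; intros H; [contradiction|].
  destruct (excluded_middle_informative (a = b)) as [->|Hab]; simpl; [split; auto; lia|].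
  destruct H as [->|H]; [congruence|]. destruct (IH H). split; auto; lia.
Qed.

Definition enum_finite {A : Type} (H : Finite A) : list A :=
  proj1_sig (constructive_indefinite_description _ H).

Lemma In_enum_finite {A} (H : Finite A) (a : A) : In a (enum_finite H).
Proof. unfold enum_finite. destruct (constructive_indefinite_description _ H). simpl. apply f. Qed.

Lemma rev_removelast {A} (l : list A) : rev (removelast l) = tl (rev l).
Proof.
  destruct l as [|a l] using rev_ind; [reflexivity|].
  rewrite removelast_last, rev_app_distr. reflexivity.
Qed.

Lemma last_rev {A} (l : list A) d : last l d = hd d (rev l).
Proof.
  destruct l as [|a l] using rev_ind; [reflexivity|].
  rewrite last_last, rev_app_distr. reflexivity.
Qed.

Lemma iter_fix (f : nat -> nat) s n : f s = s -> Nat.iter n f s = s.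
Proof. intro H. induction n; simpl; [reflexivity|]. rewrite IHn. exact H. Qed.

Lemma skipn_nth_cons (i : nat) (l : list nat) : i < length l -> skipn i l = nth i l 0 :: skipn (S i) l.
Proof.
  revert l. induction i; intros l H; destruct l; simpl in *; try lia; [reflexivity|].
  apply IHi. lia.
Qed.

(** * Coding a machine *)

Section Machine.
Variable M : PTM.

Definition sigs : list (Sig M) := enum_finite (Sig_finite M).
Definition states : list (St M) := enum_finite (St_finite M).
Definition sig_code (a : Sig M) : nat := index_of sigs a.
Definition state_code (q : St M) : nat := index_of states q.

Lemma sig_code_spec a : nth_error sigs (sig_code a) = Some a /\ sig_code a < length sigs.
Proof. apply index_of_spec, In_enum_finite. Qed.

Lemma state_code_spec q : nth_error states (state_code q) = Some q /\ state_code q < length states.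
Proof. apply index_of_spec, In_enum_finite. Qed.

Lemma sig_code_inj a b : sig_code a = sig_code b -> a = b.
Proof.
  intro H. destruct (sig_code_spec a) as [Ea _], (sig_code_spec b) as [Eb _].
  rewrite H in Ea. congruence.
Qed.

Fixpoint list_code (l : list (Sig M)) : nat :=
  match l with [] => 0 | a :: l' => S (cpair (sig_code a) (list_code l')) end.

Lemma list_code_inj l1 l2 : list_code l1 = list_code l2 -> l1 = l2.
Proof.
  revert l2. induction l1 as [|a l1 IH]; intros [|b l2]; simpl; intros H; try congruence.
  injection H as H. pose proof (f_equal cfst H) as Ha. pose proof (f_equal csnd H) as Hl.
  rewrite !cfst_pair in Ha. rewrite !csnd_pair in Hl. f_equal; [apply sig_code_inj | apply IH]; assumption.
Qed.

Lemma length_le_list_code l : length l <= list_code l.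
Proof. induction l; simpl; [lia|]. unfold cpair. lia. Qed.

Definition cons_code (a L : nat) : nat := S (cpair a L).
Definition hd_code (d L : nat) : nat := ifz L d (cfst (pred L)).
Definition tl_code (L : nat) : nat := csnd (pred L).

Lemma hd_code_spec l : hd_code (sig_code (blank M)) (list_code l) = sig_code (hd (blank M) l).
Proof. destruct l; unfold hd_code; simpl; [reflexivity | apply cfst_pair]. Qed.

Lemma tl_code_spec l : tl_code (list_code l) = list_code (tl l).
Proof. destruct l; unfold tl_code; simpl; [reflexivity | apply csnd_pair]. Qed.

(** The left part of the tape is stored reversed, so that both neighbours of
    the head are at the front of their lists. *)
Definition config_code (c : config M) : nat :=
  cpair (list_code (rev (cleft c)))
        (cpair (sig_code (chead c)) (cpair (list_code (cright c)) (state_code (cstate c)))).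

Definition move_code (m : Move) : nat := match m with MLeft => 0 | MRight => 1 end.

Definition delta_code (i : nat) : nat :=
  match nth_error sigs (cfst (csnd i)), nth_error states (csnd (csnd i)) with
  | Some sa, Some sq =>
      match delta M (cfst i =? 1) sq sa with
      | (q', a', mv) => cpair (move_code mv) (cpair (sig_code a') (state_code q'))
      end
  | _, _ => 0
  end.

(** Truncated to a finite table, the transition function becomes primitive
    recursive ([PRdet_table]). *)
Definition delta_bound : nat := S (cpair 1 (cpair (length sigs) (length states))).
Definition delta_table (i : nat) : nat := if i <? delta_bound then delta_code i else 0.

Definition step_code (C b : nat) : nat :=
  let L := cfst C in let a := cfst (csnd C) in let R := cfst (csnd (csnd C)) in
  let q := csnd (csnd (csnd C)) in
  let d := delta_table (cpair b (cpair a q)) in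
  let mv := cfst d in let a' := cfst (csnd d) in let q' := csnd (csnd d) in
  ifz mv (cpair (tl_code L) (cpair (hd_code (sig_code (blank M)) L) (cpair (cons_code a' R) q')))
         (cpair (cons_code a' L) (cpair (hd_code (sig_code (blank M)) R) (cpair (tl_code R) q'))).

Lemma delta_table_code b a q :
  delta_table (cpair (Nat.b2n b) (cpair (sig_code a) (state_code q))) =
  let '(q', a', mv) := delta M b q a in cpair (move_code mv) (cpair (sig_code a') (state_code q')).
Proof.
  unfold delta_table. rewrite (proj2 (Nat.ltb_lt _ _)).
  - unfold delta_code. cpair_simpl.
    destruct (sig_code_spec a) as [-> _], (state_code_spec q) as [-> _].
    replace (Nat.b2n b =? 1) with b by (destruct b; reflexivity). reflexivity.
  - unfold delta_bound. apply Nat.lt_succ_r. apply cpair_mono; [destruct b; simpl; lia|].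
    apply cpair_mono; apply Nat.lt_le_incl; [apply sig_code_spec | apply state_code_spec].
Qed.

Lemma step_code_spec c b : step_code (config_code c) (Nat.b2n b) = config_code (step M c b).
Proof.
  destruct c as [L a R q]. unfold step_code, config_code, step. simpl. cpair_simpl.
  rewrite delta_table_code. destruct (delta M b q a) as [[q' a'] []]; cpair_simpl; simpl.
  - rewrite rev_removelast, last_rev, <- tl_code_spec, hd_code_spec. reflexivity.
  - rewrite rev_app_distr, hd_code_spec, tl_code_spec. reflexivity.
Qed.

Definition final_val (q : nat) : nat :=
  match nth_error states q with Some s => Nat.b2n (final M s) | None => 0 end.
Definition final_table (q : nat) : nat := if q <? length states then final_val q else 0.
Definition final_code (C : nat) : nat := final_table (csnd (csnd (csnd C))).

Lemma final_code_spec c : final_code (config_code c) = Nat.b2n (final M (cstate c)).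
Proof.
  unfold final_code, config_code, final_table, final_val. cpair_simpl.
  destruct (state_code_spec (cstate c)) as [E Hl]. apply Nat.ltb_lt in Hl. rewrite Hl, E. reflexivity.
Qed.

Definition halts_from (c : config M) (bs : list bool) (out : list bool) : Prop :=
  (forall j, j < length bs -> final M (cstate (run M (firstn j bs) c)) = false) /\
  final M (cstate (run M bs c)) = true /\
  cleft (run M bs c) = bits_to_sig M out /\ cright (run M bs c) = [].

Lemma indicator_halts_from_nil c out :
  indicator (halts_from c [] out) =
  Nat.b2n (final M (cstate c)) * indicator (cleft c = bits_to_sig M out /\ cright c = []).
Proof.
  assert (Hnil : halts_from c [] out <->
                 final M (cstate c) = true /\ cleft c = bits_to_sig M out /\ cright c = []).
  { unfold halts_from. simpl. split; [tauto|]. intros H. split; [intros; lia | tauto]. }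
  unfold indicator. destruct (final M (cstate c)) eqn:F; simpl;
    repeat destruct (excluded_middle_informative _); try reflexivity; exfalso; intuition congruence.
Qed.

Lemma indicator_halts_from_cons c b bs out :
  indicator (halts_from c (b :: bs) out) =
  (1 - Nat.b2n (final M (cstate c))) * indicator (halts_from (step M c b) bs out).
Proof.
  assert (Hcons : halts_from c (b :: bs) out <->
                  final M (cstate c) = false /\ halts_from (step M c b) bs out).
  { unfold halts_from. simpl. split.
    - intros [H1 H2]. split; [apply (H1 0); lia|]. split; [|exact H2].
      intros j Hj. apply (H1 (S j)). lia.
    - intros [H0 [H1 H2]]. split; [|exact H2]. intros [|j] Hj; [exact H0 | apply H1; lia]. }
  unfold indicator. destruct (final M (cstate c)) eqn:F; simpl;
    repeat destruct (excluded_middle_informative _); try reflexivity; exfalso; intuition congruence.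
Qed.

Definition output_test (C y : nat) : nat :=
  (if cfst C =? list_code (rev (bits_to_sig M (nbar y))) then 1 else 0) *
  (if cfst (csnd (csnd C)) =? 0 then 1 else 0).

Lemma output_test_spec c y :
  output_test (config_code c) y = indicator (cleft c = bits_to_sig M (nbar y) /\ cright c = []).
Proof.
  unfold output_test, config_code, indicator. cpair_simpl.
  destruct (excluded_middle_informative _) as [[H1 H2]|H].
  - rewrite H1, H2, Nat.eqb_refl. reflexivity.
  - destruct (Nat.eqb_spec (list_code (rev (cleft c))) (list_code (rev (bits_to_sig M (nbar y))))) as [E|E];
      [|reflexivity].
    apply list_code_inj, (f_equal (@rev _)) in E. rewrite !rev_involutive in E.
    destruct (cright c); [exfalso; tauto | reflexivity].
Qed.

(** A checking state [<C, <t, ok>>] runs the configuration [C] on the bits of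
    [t], least significant first, and [ok] records that no final state was
    met before the last step. *)
Definition check_step (s : nat) : nat :=
  cpair (step_code (cfst s) (cfst (csnd s) mod 2))
        (cpair (cfst (csnd s) / 2) (csnd (csnd s) * (1 - final_code (cfst s)))).

Definition check_run (n y s : nat) : nat :=
  let s' := Nat.iter n check_step s in csnd (csnd s') * final_code (cfst s') * output_test (cfst s') y.

Lemma check_run_spec n y : forall c t ok,
  check_run n y (cpair (config_code c) (cpair t ok)) = ok * indicator (halts_from c (bits_of t n) (nbar y)).
Proof.
  induction n; intros c t ok; unfold check_run.
  - simpl Nat.iter. cpair_simpl. rewrite final_code_spec, output_test_spec.
    cbn [bits_of]. rewrite indicator_halts_from_nil. lia.
  - rewrite Nat.iter_succ_r. fold (check_run n y (check_step (cpair (config_code c) (cpair t ok)))).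
    unfold check_step at 1. cpair_simpl.
    rewrite <- b2n_mod2, step_code_spec, final_code_spec, IHn.
    cbn [bits_of]. rewrite indicator_halts_from_cons. lia.
Qed.

Definition halting_count (W n y : nat) : nat :=
  bsum (2 ^ n) (fun t => check_run n y (cpair W (cpair t 1))).

Lemma halting_count_spec c n y :
  halting_count (config_code c) n y = bsum (2 ^ n) (fun t => indicator (halts_from c (bits_of t n) (nbar y))).
Proof. unfold halting_count. apply bsum_ext. intros t _. rewrite check_run_spec. lia. Qed.

Lemma halting_count_init w n y :
  halting_count (config_code (init M w)) n y =
  bsum (2 ^ n) (fun t => indicator (halts_with M w (bits_of t n) (nbar y))).
Proof. apply halting_count_spec. Qed.

Lemma bits_to_sig_inj a b : bits_to_sig M a = bits_to_sig M b -> a = b.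
Proof.
  destruct (syms_distinct M) as [D _].
  revert b. induction a as [|x a IH]; intros [|y b]; simpl; intros H; try discriminate; [reflexivity|].
  injection H as H1 H2. f_equal; [destruct x, y; congruence | apply IH, H2].
Qed.

Lemma halts_from_prefix_unique c L n n' y y' :
  n <= length L -> n' <= length L ->
  halts_from c (firstn n L) (nbar y) -> halts_from c (firstn n' L) (nbar y') -> n = n' /\ y = y'.
Proof.
  assert (Hlt : forall n n' out out', n < n' -> n' <= length L ->
            halts_from c (firstn n L) out -> halts_from c (firstn n' L) out' -> False).
  { intros m m' out out' Hm Hm' [_ [F1 _]] [H2 _].
    specialize (H2 m ltac:(rewrite length_firstn; lia)).
    rewrite firstn_firstn, Nat.min_l in H2 by lia. congruence. }
  intros Hn Hn' H H'. assert (n = n') as <-.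
  { destruct (Nat.lt_trichotomy n n') as [?|[?|?]]; [exfalso; eauto | assumption | exfalso; eauto]. }
  split; [reflexivity|]. destruct H as [_ [_ [O _]]], H' as [_ [_ [O' _]]].
  rewrite O in O'. apply nbar_inj, bits_to_sig_inj, O'.
Qed.

Lemma halting_count_scaled c z w : cfst w <= z ->
  halting_count (config_code c) (cfst w) (csnd w) * 2 ^ (z - cfst w) =
  bsum (2 ^ z) (fun t => indicator (halts_from c (firstn (cfst w) (bits_of t z)) (nbar (csnd w)))).
Proof.
  intro Hn. rewrite halting_count_spec, Nat.mul_comm.
  rewrite <- (bsum_mul_mod (2 ^ cfst w) (2 ^ (z - cfst w))) by (apply Nat.neq_0_lt_0, Nat.pow_nonzero; lia).
  rewrite <- Nat.pow_add_r, Nat.add_comm, Nat.sub_add by exact Hn.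
  apply bsum_ext. intros t _. rewrite (bits_of_mod t (cfst w) z) by exact Hn. reflexivity.
Qed.

(** Kraft's inequality for the prefix-free set of halting choice strings. *)
Lemma halting_counts_kraft c z :
  bsum (S z) (fun w => halting_count (config_code c) (cfst w) (csnd w) * 2 ^ (z - cfst w)) <= 2 ^ z.
Proof.
  rewrite (bsum_ext _ _ (fun w => bsum (2 ^ z) (fun t =>
             indicator (halts_from c (firstn (cfst w) (bits_of t z)) (nbar (csnd w))))))
    by (intros w Hw; apply halting_count_scaled; pose proof (cfst_le w); lia).
  rewrite bsum_swap. transitivity (bsum (2 ^ z) (fun _ => 1)); [|rewrite bsum_const; lia].
  apply bsum_le. intros t _. apply bsum_atmost1; [intros; apply indicator_le_1|].
  intros w w' Hw Hw' N N'. apply indicator_neq0 in N, N'.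
  pose proof (cfst_le w). pose proof (cfst_le w').
  destruct (halts_from_prefix_unique c (bits_of t z) (cfst w) (cfst w') (csnd w) (csnd w')) as [E1 E2];
    try rewrite length_bits_of; try lia; try assumption.
  rewrite <- (cpair_surj w), <- (cpair_surj w'), E1, E2. reflexivity.
Qed.

(** * Primitive recursive simulation *)

Lemma PRdet_step_code k F G : PRdet k F -> PRdet k G -> PRdet k (fun l => step_code (F l) (G l)).
Proof. intros. unfold step_code, delta_table, cons_code, hd_code, tl_code. cbv zeta. prdet; auto. Qed.

Lemma PRdet_final_code k F : PRdet k F -> PRdet k (fun l => final_code (F l)).
Proof. intros. unfold final_code, final_table. prdet; auto. Qed.

(** [peel_step] strips the least significant bit of the first component and
    feeds it to [g]; iterated from [<p, acc>] it folds [pos_bits p] (the bits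
    of [p] below its leading [1]) from the right. *)
Definition peel_step (g : nat -> nat -> nat) (s : nat) : nat :=
  if cfst s <=? 1 then s else cpair (cfst s / 2) (g (cfst s mod 2) (csnd s)).

Lemma peel_step_double g m b acc : 1 <= m ->
  peel_step g (cpair (2 * m + Nat.b2n b) acc) = cpair m (g (Nat.b2n b) acc).
Proof.
  intro Hm. unfold peel_step. cpair_simpl.
  rewrite (proj2 (Nat.leb_gt _ _)) by (destruct b; simpl; lia).
  replace ((2 * m + Nat.b2n b) / 2) with m by (apply Nat.div_unique with (Nat.b2n b); destruct b; simpl; lia).
  replace ((2 * m + Nat.b2n b) mod 2) with (Nat.b2n b) by (apply Nat.mod_unique with m; destruct b; simpl; lia).
  reflexivity.
Qed.

Lemma peel_iter g : forall p fuel acc, Pos.to_nat p <= fuel ->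
  csnd (Nat.iter fuel (peel_step g) (cpair (Pos.to_nat p) acc)) =
  fold_right (fun b a => g (Nat.b2n b) a) acc (pos_bits p).
Proof.
  assert (Hcase : forall p b fuel acc,
            (forall fuel acc, Pos.to_nat p <= fuel ->
               csnd (Nat.iter fuel (peel_step g) (cpair (Pos.to_nat p) acc)) =
               fold_right (fun b a => g (Nat.b2n b) a) acc (pos_bits p)) ->
            2 * Pos.to_nat p + Nat.b2n b <= fuel ->
            csnd (Nat.iter fuel (peel_step g) (cpair (2 * Pos.to_nat p + Nat.b2n b) acc)) =
            fold_right (fun b a => g (Nat.b2n b) a) acc (pos_bits p ++ [b])).
  { intros p b fuel acc IH Hf. pose proof (Pos2Nat.is_pos p).
    destruct fuel as [|fuel]; [destruct b; simpl in Hf; lia|].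
    rewrite Nat.iter_succ_r, peel_step_double, IH by (destruct b; simpl in Hf; lia).
    rewrite fold_right_app. reflexivity. }
  induction p; intros fuel acc Hf.
  - rewrite Pos2Nat.inj_xI in *.
    replace (S (2 * Pos.to_nat p)) with (2 * Pos.to_nat p + Nat.b2n true) by (simpl; lia).
    apply (Hcase p true fuel acc IHp). simpl. lia.
  - rewrite Pos2Nat.inj_xO in *. rewrite <- (Nat.add_0_r (2 * Pos.to_nat p)).
    apply (Hcase p false fuel acc IHp). simpl. lia.
  - simpl. rewrite iter_fix; [cpair_simpl; reflexivity|]. unfold peel_step. cpair_simpl. reflexivity.
Qed.

Lemma PRdet_peel k g F N A :
  PRdet 2 (fun l => g (nth 0 l 0) (nth 1 l 0)) -> PRdet k F -> PRdet k N -> PRdet k A ->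
  PRdet k (fun l => csnd (Nat.iter (N l) (peel_step g) (cpair (F l) (A l)))).
Proof.
  intros Hg HF HN HA. apply PRdet_csnd.
  apply (PRdet_iter k (fun l => cpair (F l) (A l)) N (fun _ s => peel_step g s)); [prdet; auto | auto |].
  unfold peel_step. apply PRdet_if_leb; [prdet | prdet | prdet |].
  apply PRdet_cpair; [prdet|].
  apply (PRdet_op2 _ g (fun l => cfst (nth k l 0) mod 2) (fun l => csnd (nth k l 0))); [exact Hg | prdet | prdet].
Qed.

Definition bit_sym_code (b : nat) : nat := if b =? 1 then sig_code (sym1 M) else sig_code (sym0 M).

Lemma bit_sym_code_b2n b : bit_sym_code (Nat.b2n b) = sig_code (if b then sym1 M else sym0 M).
Proof. destruct b; reflexivity. Qed.

Lemma peel_iter_succ_nat g n acc :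
  csnd (Nat.iter (S n) (peel_step g) (cpair (S n) acc)) = fold_right (fun b a => g (Nat.b2n b) a) acc (nbar n).
Proof. unfold nbar. rewrite <- SuccNat2Pos.id_succ. apply peel_iter. lia. Qed.

Definition nbar_code (y : nat) : nat :=
  csnd (Nat.iter (S y) (peel_step (fun b a => cons_code (bit_sym_code b) a)) (cpair (S y) 0)).

Lemma nbar_code_spec y : nbar_code y = list_code (bits_to_sig M (nbar y)).
Proof.
  unfold nbar_code. rewrite peel_iter_succ_nat. unfold bits_to_sig.
  induction (nbar y) as [|b l IH]; simpl; [reflexivity|]. rewrite IH, bit_sym_code_b2n. reflexivity.
Qed.

Fixpoint list_code_app (l : list (Sig M)) (acc : nat) : nat :=
  match l with [] => acc | a :: l' => cons_code (sig_code a) (list_code_app l' acc) end.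

Lemma list_code_app_app l1 l2 acc : list_code_app (l1 ++ l2) acc = list_code_app l1 (list_code_app l2 acc).
Proof. induction l1; simpl; congruence. Qed.

Lemma list_code_app_nil l : list_code_app l 0 = list_code l.
Proof. induction l; simpl; [reflexivity|]. rewrite IHl. reflexivity. Qed.

Definition rev_step (s : nat) : nat :=
  ifz (cfst s) s (cpair (tl_code (cfst s)) (cons_code (hd_code 0 (cfst s)) (csnd s))).
Definition rev_code (L : nat) : nat := csnd (Nat.iter L rev_step (cpair L 0)).

Lemma rev_iter : forall l fuel acc, length l <= fuel ->
  csnd (Nat.iter fuel rev_step (cpair (list_code l) acc)) = list_code_app (rev l) acc.
Proof.
  induction l as [|a l IH]; intros fuel acc Hf.
  - simpl. rewrite iter_fix; [cpair_simpl; reflexivity|]. unfold rev_step. cpair_simpl. reflexivity.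
  - destruct fuel as [|fuel]; [simpl in Hf; lia|].
    rewrite Nat.iter_succ_r. unfold rev_step at 2. cpair_simpl. simpl list_code. simpl ifz.
    unfold tl_code, hd_code. simpl. cpair_simpl. rewrite IH by (simpl in Hf; lia).
    simpl. rewrite list_code_app_app. reflexivity.
Qed.

Lemma rev_code_spec l : rev_code (list_code l) = list_code (rev l).
Proof. unfold rev_code. rewrite rev_iter by apply length_le_list_code. apply list_code_app_nil. Qed.

Lemma PRdet_output_test k F G : PRdet k F -> PRdet k G -> PRdet k (fun l => output_test (F l) (G l)).
Proof.
  intros HF HG. unfold output_test.
  apply (PRdet_ext _ (fun l => (if cfst (F l) =? rev_code (nbar_code (G l)) then 1 else 0) *
                               (if cfst (csnd (csnd (F l))) =? 0 then 1 else 0))).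
  { intros l _. rewrite nbar_code_spec, rev_code_spec. reflexivity. }
  apply PRdet_mul; apply PRdet_if_eqb; prdet; auto.
  unfold rev_code.
  apply (PRdet_iter k (fun l => cpair (nbar_code (G l)) 0) (fun l => nbar_code (G l)) (fun _ s => rev_step s)).
  - apply PRdet_cpair; [|prdet]. unfold nbar_code, cons_code, bit_sym_code. apply PRdet_peel; prdet; auto.
  - unfold nbar_code, cons_code, bit_sym_code. apply PRdet_peel; prdet; auto.
  - unfold rev_step, tl_code, cons_code, hd_code. prdet.
Qed.

Lemma PRdet_check_run k N Y S0 :
  PRdet k N -> PRdet k Y -> PRdet k S0 -> PRdet k (fun l => check_run (N l) (Y l) (S0 l)).
Proof.
  intros HN HY HS. unfold check_run. cbv zeta.
  assert (HI : PRdet k (fun l => Nat.iter (N l) check_step (S0 l))).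
  { apply (PRdet_iter k S0 N (fun _ s => check_step s)); [exact HS | exact HN |].
    unfold check_step. apply PRdet_cpair; [apply PRdet_step_code; prdet|].
    apply PRdet_cpair; [prdet|]. apply PRdet_mul; [prdet|].
    apply PRdet_sub; [prdet|]. apply PRdet_final_code. prdet. }
  apply PRdet_mul; [apply PRdet_mul|]; [prdet; auto | apply PRdet_final_code | apply PRdet_output_test];
    prdet; auto.
Qed.

Lemma PRdet_halting_count k W N Y :
  PRdet k W -> PRdet k N -> PRdet k Y -> PRdet k (fun l => halting_count (W l) (N l) (Y l)).
Proof.
  intros HW HN HY. unfold halting_count.
  apply (PRdet_bsum k (fun l => 2 ^ N l) (fun l t => check_run (N l) (Y l) (cpair (W l) (cpair t 1))));
    [prdet; auto|].
  apply PRdet_check_run; [apply PRdet_weaken; auto | apply PRdet_weaken; auto |].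
  apply PRdet_cpair; [apply PRdet_weaken; auto | prdet].
Qed.

Definition enc_component (n : nat) : list bool := flat_map (fun b => [b; b]) (nbar n) ++ [false; true].

Definition prepend_code (n L : nat) : nat :=
  csnd (Nat.iter (S n) (peel_step (fun b a => cons_code (bit_sym_code b) (cons_code (bit_sym_code b) a)))
                 (cpair (S n) (cons_code (sig_code (sym0 M)) (cons_code (sig_code (sym1 M)) L)))).

Lemma prepend_code_spec n bs :
  prepend_code n (list_code (bits_to_sig M bs)) = list_code (bits_to_sig M (enc_component n ++ bs)).
Proof.
  unfold prepend_code, enc_component. rewrite peel_iter_succ_nat.
  unfold bits_to_sig. rewrite <- app_assoc, map_app. simpl.
  induction (nbar n) as [|b l IH]; simpl; [reflexivity|]. rewrite IH, bit_sym_code_b2n. reflexivity.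
Qed.

Lemma PRdet_prepend_code k F G : PRdet k F -> PRdet k G -> PRdet k (fun l => prepend_code (F l) (G l)).
Proof. intros. unfold prepend_code, cons_code, bit_sym_code. apply PRdet_peel; prdet; auto. Qed.

Definition enc_tuple_code (l : list nat) : nat := fold_right prepend_code 0 l.

Lemma enc_tuple_code_spec k (x : Vector.t nat k) :
  enc_tuple_code (Vector.to_list x) = list_code (bits_to_sig M (enc_tuple x)).
Proof.
  unfold enc_tuple, enc_tuple_code. rewrite VectorSpec.to_list_fold_right.
  induction (Vector.to_list x) as [|n l IH]; simpl; [reflexivity|].
  rewrite IH, prepend_code_spec. unfold enc_component. rewrite <- app_assoc. reflexivity.
Qed.

Lemma PRdet_enc_tuple_code k : PRdet k enc_tuple_code.
Proof.
  assert (Hsuffix : forall j, j <= k -> PRdet k (fun l => enc_tuple_code (skipn (k - j) l))).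
  { induction j; intros Hj.
    - eapply PRdet_ext; [|apply (PRdet_const k 0)].
      intros l Hl. rewrite Nat.sub_0_r, skipn_all2; [reflexivity | lia].
    - eapply PRdet_ext;
        [|apply (PRdet_prepend_code k (fun l => nth (k - S j) l 0) _ (PRdet_var _ _) (IHj ltac:(lia)))].
      intros l Hl. cbv beta. rewrite (skipn_nth_cons (k - S j)) by lia.
      replace (S (k - S j)) with (k - j) by lia. reflexivity. }
  eapply PRdet_ext; [|apply (Hsuffix k (le_n k))]. intros l Hl. rewrite Nat.sub_diag. reflexivity.
Qed.

Definition init_code (L : nat) : nat :=
  cpair 0 (cpair (hd_code (sig_code (blank M)) L) (cpair (tl_code L) (state_code (qstart M)))).

Lemma init_code_spec w : init_code (list_code (bits_to_sig M w)) = config_code (init M w).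
Proof.
  unfold init_code, init, config_code. destruct (bits_to_sig M w) as [|a v]; [reflexivity|].
  rewrite (hd_code_spec (a :: v)), (tl_code_spec (a :: v)). reflexivity.
Qed.

Lemma PRdet_init_code k F : PRdet k F -> PRdet k (fun l => init_code (F l)).
Proof. intros. unfold init_code, hd_code, tl_code. prdet; auto. Qed.

End Machine.

(** * Counting choice strings *)

Local Open Scope R_scope.

Lemma fold_bitlists n : forall (P : list bool -> Prop) c,
  fold_right Rplus 0 (map (fun bs => if excluded_middle_informative (P bs) then c else 0) (bitlists n))
  = INR (bsum (2 ^ n) (fun t => indicator (P (bits_of t n)))) * c.
Proof.
  induction n as [|n IH]; intros P c.
  - simpl. unfold indicator. destruct (excluded_middle_informative (P [])); simpl; ring.
  - set (sum := fun Q : list bool -> Prop =>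
          fun L => fold_right Rplus 0 (map (fun bs => if excluded_middle_informative (Q bs) then c else 0) L)).
    assert (Hsplit : forall L, sum P (flat_map (fun l => [false :: l; true :: l]) L) =
                               sum (fun bs => P (false :: bs)) L + sum (fun bs => P (true :: bs)) L).
    { unfold sum. induction L as [|l L IHL]; simpl; [ring|]. rewrite IHL. ring. }
    change (sum P (bitlists (S n)) = INR (bsum (2 ^ S n) (fun t => indicator (P (bits_of t (S n))))) * c).
    simpl bitlists. rewrite Hsplit. unfold sum. rewrite !IH, <- Rmult_plus_distr_r, <- plus_INR.
    rewrite Nat.pow_succ_r', bsum_double. do 3 f_equal; apply bsum_ext; intros t _.
    + replace (2 * t)%nat with (2 * t + Nat.b2n false)%nat by (simpl; lia).
      rewrite bits_of_double. reflexivity.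
    + replace (2 * t + 1)%nat with (2 * t + Nat.b2n true)%nat by reflexivity.
      rewrite bits_of_double. reflexivity.
Qed.

Lemma IO_eq M w out : IO M w out =
  nsum (fun n => INR (bsum (2 ^ n) (fun t => indicator (halts_with M w (bits_of t n) out))) * (/2) ^ n).
Proof.
  unfold IO. f_equal. apply functional_extensionality; intro n. apply fold_bitlists.
Qed.

(** * Binary digits of a ratio *)

Definition double_rem (B r : nat) : nat := if (B <=? 2 * r)%nat then (2 * r - B)%nat else (2 * r)%nat.
Definition bin_rem (A B i : nat) : nat := Nat.iter i (double_rem B) A.

(** The digits of [A / B] after the binary point, where a ratio [>= 1] is
    capped at [1 = 0.111...]. *)
Definition bin_digit (A B i : nat) : nat :=
  if (B <=? A)%nat then 1%nat else if (B <=? 2 * bin_rem A B i)%nat then 1%nat else 0%nat.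
Definition ratio (A B : nat) : R := if (B <=? A)%nat then 1 else INR A / INR B.

Lemma bin_rem_lt A B i : (A < B)%nat -> (bin_rem A B i < B)%nat.
Proof.
  intro H. induction i; [exact H|]. change (bin_rem A B (S i)) with (double_rem B (bin_rem A B i)).
  unfold double_rem. destruct (Nat.leb_spec B (2 * bin_rem A B i)); lia.
Qed.

Lemma bin_digit_le_1 A B i : (bin_digit A B i <= 1)%nat.
Proof. unfold bin_digit. destruct (B <=? A)%nat; [lia|]. destruct (B <=? _)%nat; lia. Qed.

Lemma sum_bin_digits_partial A B N : (A < B)%nat ->
  sum_f_R0 (fun i => INR (bin_digit A B i) * (/2) ^ (S i)) N =
  INR A / INR B - INR (bin_rem A B (S N)) * (/2) ^ (S N) / INR B.
Proof.
  intro H. assert (HB : 0 < INR B) by (apply lt_0_INR; lia).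
  assert (Step : forall i, INR (bin_rem A B (S i)) = 2 * INR (bin_rem A B i) - INR (bin_digit A B i) * INR B).
  { intro i. unfold bin_digit. rewrite (proj2 (Nat.leb_gt B A)) by lia.
    change (bin_rem A B (S i)) with (double_rem B (bin_rem A B i)). unfold double_rem.
    destruct (Nat.leb_spec B (2 * bin_rem A B i)).
    - rewrite minus_INR, mult_INR by lia. simpl. ring.
    - rewrite mult_INR. simpl. ring. }
  induction N.
  - simpl sum_f_R0. rewrite Step. change (bin_rem A B 0) with A. field. lra.
  - rewrite tech5, IHN, (Step (S N)). simpl pow. field. lra.
Qed.

Lemma infinite_sum_bin_digits A B :
  infinite_sum (fun i => INR (bin_digit A B i) * (/2) ^ (S i)) (ratio A B).
Proof.
  unfold ratio. destruct (Nat.leb_spec B A).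
  - replace (fun i => INR (bin_digit A B i) * (/2) ^ (S i)) with (fun i => (/2) ^ (S i));
      [apply infinite_sum_half_powers|].
    apply functional_extensionality. intro i. unfold bin_digit.
    rewrite (proj2 (Nat.leb_le B A)) by lia. simpl. ring.
  - apply (infinite_sum_geom_rate _ _ 1); [lra|]. intro N. rewrite sum_bin_digits_partial by lia.
    assert (HB : 0 < INR B) by (apply lt_0_INR; lia).
    pose proof (lt_INR _ _ (bin_rem_lt A B (S N) H)) as Hrem.
    pose proof (pos_INR (bin_rem A B (S N))).
    assert (0 < (/2) ^ S N) by (apply pow_lt; lra).
    replace (INR A / INR B - INR (bin_rem A B (S N)) * (/ 2) ^ S N / INR B - INR A / INR B)
      with (- (INR (bin_rem A B (S N)) / INR B * (/ 2) ^ S N)) by (field; lra).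
    rewrite Rabs_Ropp, Rabs_pos_eq.
    + apply Rmult_le_compat_r; [lra|]. apply Rmult_le_reg_r with (INR B); [lra|].
      unfold Rdiv. rewrite Rmult_assoc, Rinv_l; lra.
    + apply Rmult_le_pos; [|lra]. apply Rmult_le_pos; [lra|]. apply Rlt_le, Rinv_0_lt_compat; lra.
Qed.

Lemma infinite_sum_bin_digits_compl A B :
  infinite_sum (fun i => INR (1 - bin_digit A B i) * (/2) ^ (S i)) (1 - ratio A B).
Proof.
  apply infinite_sum_Un_cv.
  pose proof (CV_minus _ _ _ _ (proj1 (infinite_sum_Un_cv _ _) infinite_sum_half_powers)
                               (proj1 (infinite_sum_Un_cv _ _) (infinite_sum_bin_digits A B))) as C.
  eapply Un_cv_ext; [|exact C]. intro N. simpl. rewrite <- minus_sum. apply sum_eq. intros i _.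
  pose proof (bin_digit_le_1 A B i). destruct (bin_digit A B i) as [|[|]]; simpl; try lia; ring.
Qed.

Fixpoint psum (f : nat -> R) (n : nat) : R := match n with O => 0 | S m => psum f m + f m end.

Lemma sum_f_R0_psum f N : sum_f_R0 f N = psum f (S N).
Proof. induction N; simpl in *; [ring|]. rewrite IHN. ring. Qed.

Lemma psum_add f m n : psum f (m + n) = psum f m + psum (fun i => f (m + i)%nat) n.
Proof. induction n; simpl; [rewrite Nat.add_0_r; ring|]. rewrite Nat.add_succ_r. simpl. rewrite IHn. ring. Qed.

Lemma psum_mono f m n : (forall i, 0 <= f i) -> (m <= n)%nat -> psum f m <= psum f n.
Proof. intros H Hmn. induction Hmn; [lra|]. simpl. specialize (H m0). lra. Qed.

Lemma psum_le f g n : (forall i, (i < n)%nat -> f i <= g i) -> psum f n <= psum g n.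
Proof.
  induction n; intros H; simpl; [lra|].
  pose proof (H n ltac:(lia)). specialize (IHn ltac:(intros; apply H; lia)). lra.
Qed.

Lemma psum_ext f g n : (forall i, (i < n)%nat -> f i = g i) -> psum f n = psum g n.
Proof. induction n; intros H; simpl; [lra|]. rewrite H, IHn by (intros; try apply H; lia). ring. Qed.

Lemma psum_single (c : nat -> R) y n :
  psum (fun b => if (y =? b)%nat then c b else 0) n = if (y <? n)%nat then c y else 0.
Proof.
  induction n; simpl; [destruct y; reflexivity|]. rewrite IHn.
  destruct (Nat.eqb_spec y n); destruct (Nat.ltb_spec y n); destruct (Nat.ltb_spec y (S n)); subst; try lia; ring.
Qed.

Lemma nsum_psum (f : nat -> R) (L : R) : Un_cv (fun n => psum f n) L -> nsum f = L.
Proof.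
  intro H. apply nsum_spec, infinite_sum_Un_cv. intros eps He. destruct (H eps He) as [N HN].
  exists N. intros n Hn. rewrite sum_f_R0_psum. apply HN. lia.
Qed.

(** * Sampling a subprobability by hazard rates *)

Section Hazard.
Variable C : nat -> nat.
(** [C z] counts the choice strings of length [cfst z] that end at stage [z]. *)
Hypothesis C_kraft : forall z, (bsum (S z) (fun w => C w * 2 ^ (z - cfst w)) <= 2 ^ z)%nat.

Definition stage_prob (z : nat) : R := INR (C z) * (/2) ^ (cfst z).

(** Everything is scaled by [2^z]: [stage_num z = 2^z stage_prob z] and
    [mass_before z = 2^z sum_(w < z) stage_prob w]. *)
Definition stage_num (z : nat) : nat := (C z * 2 ^ (z - cfst z))%nat.
Definition mass_before (z : nat) : nat := bsum z (fun w => C w * 2 ^ (z - cfst w))%nat.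
Definition stage_den (z : nat) : nat := (2 ^ z - mass_before z)%nat.
Definition hazard (z : nat) : R := ratio (stage_num z) (stage_den z).

Lemma stage_mass_le z : (mass_before z + stage_num z <= 2 ^ z)%nat.
Proof. apply C_kraft. Qed.

Lemma mass_before_S z : mass_before (S z) = (2 * (mass_before z + stage_num z))%nat.
Proof.
  transitivity (bsum (S z) (fun i => 2 * (C i * 2 ^ (z - cfst i))))%nat.
  - unfold mass_before. apply bsum_ext. intros i Hi. pose proof (cfst_le i).
    replace (S z - cfst i)%nat with (S (z - cfst i)) by lia. rewrite Nat.pow_succ_r'. lia.
  - rewrite bsum_scal. reflexivity.
Qed.

Lemma stage_den_S z : stage_den (S z) = (2 * (stage_den z - stage_num z))%nat.
Proof. unfold stage_den. rewrite mass_before_S. pose proof (stage_mass_le z). rewrite Nat.pow_succ_r'. lia. Qed.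

Lemma prodlt_hazard_compl z : prodlt z (fun w => 1 - hazard w) = INR (stage_den z) * (/2) ^ z.
Proof.
  induction z.
  - simpl. unfold stage_den, mass_before. simpl. ring.
  - simpl prodlt. rewrite IHz, stage_den_S. unfold hazard, ratio.
    destruct (Nat.leb_spec (stage_den z) (stage_num z)).
    + replace (stage_den z - stage_num z)%nat with 0%nat by lia. simpl. ring.
    + rewrite mult_INR, minus_INR by lia. simpl pow. simpl INR.
      assert (0 < INR (stage_den z)) by (apply lt_0_INR; lia). field. lra.
Qed.

Lemma stage_num_scaled z : INR (stage_num z) * (/2) ^ z = stage_prob z.
Proof.
  unfold stage_num, stage_prob. pose proof (cfst_le z). rewrite mult_INR, pow_INR.
  replace (INR 2) with 2 by (simpl; ring).
  assert (E : (/2) ^ z = (/2) ^ (cfst z) * (/2) ^ (z - cfst z)) by (rewrite <- pow_add; f_equal; lia).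
  rewrite E.
  replace (INR (C z) * 2 ^ (z - cfst z) * ((/ 2) ^ cfst z * (/ 2) ^ (z - cfst z)))
    with (INR (C z) * (/ 2) ^ cfst z * (2 ^ (z - cfst z) * (/ 2) ^ (z - cfst z))) by ring.
  rewrite pow2_mul_inv. ring.
Qed.

Lemma hazard_mul_survival z : hazard z * (INR (stage_den z) * (/2) ^ z) = stage_prob z.
Proof.
  rewrite <- stage_num_scaled. unfold hazard, ratio. destruct (Nat.leb_spec (stage_den z) (stage_num z)).
  - assert (stage_den z = stage_num z) as ->. { pose proof (stage_mass_le z). unfold stage_den in *. lia. } ring.
  - assert (0 < INR (stage_den z)) by (apply lt_0_INR; lia). field. lra.
Qed.

Lemma psum_stage_prob Z : psum stage_prob Z = INR (mass_before Z) * (/2) ^ Z.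
Proof.
  induction Z; [simpl; unfold mass_before; simpl; ring|].
  simpl psum. rewrite IHZ, mass_before_S, <- stage_num_scaled, mult_INR, plus_INR.
  simpl pow. simpl INR. field.
Qed.

Lemma psum_stage_prob_le_1 Z : psum stage_prob Z <= 1.
Proof.
  rewrite psum_stage_prob. pose proof (stage_mass_le Z) as Hle.
  assert (INR (mass_before Z) <= 2 ^ Z).
  { rewrite <- (pow_INR 2). apply le_INR. lia. }
  pose proof (pow2_mul_inv Z). assert (0 <= (/2) ^ Z) by (apply pow_le; lra). nra.
Qed.

Lemma muPF_hazard k (f : PF (S k)) x :
  (forall w, f (Vector.shiftin w x) 0%nat = hazard w /\
             nsum (fun j => f (Vector.shiftin w x) (S j)) = 1 - hazard w) ->
  forall z, muPF f x z = stage_prob z.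
Proof.
  intros Hf z. unfold muPF. rewrite (proj1 (Hf z)).
  replace (fun w => nsum (fun j => f (Vector.shiftin w x) (S j))) with (fun w => 1 - hazard w).
  - rewrite prodlt_hazard_compl. apply hazard_mul_survival.
  - apply functional_extensionality; intro w. symmetry. apply (proj2 (Hf w)).
Qed.

End Hazard.


(** * Summing a fibre of the Cantor pairing *)

(** The codes below [tri K] are exactly the pairs on the first [K] diagonals. *)
Lemma psum_csnd_fiber (G : nat -> nat -> R) y K :
  psum (fun z => if (y =? csnd z)%nat then G (cfst z) (csnd z) else 0) (tri K)
  = psum (fun n => G n y) (K - y).
Proof.
  induction K; [simpl; destruct y; reflexivity|].
  change (tri (S K)) with (tri K + S K)%nat. rewrite psum_add, IHK.
  rewrite (psum_ext (fun i => if (y =? csnd (tri K + i))%nat then G (cfst (tri K + i)) (csnd (tri K + i)) else 0)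
                    (fun b => if (y =? b)%nat then G (K - b)%nat b else 0)).
  - rewrite psum_single. destruct (Nat.ltb_spec y (S K)).
    + replace (S K - y)%nat with (S (K - y)) by lia. reflexivity.
    + replace (S K - y)%nat with 0%nat by lia. replace (K - y)%nat with 0%nat by lia. simpl. ring.
  - intros b Hb. replace (tri K + b)%nat with (cpair (K - b) b) by (unfold cpair; f_equal; f_equal; lia).
    rewrite cfst_pair, csnd_pair. reflexivity.
Qed.

Lemma nsum_csnd_fiber (G : nat -> nat -> R) y :
  (forall n m, 0 <= G n m) -> (forall N, psum (fun n => G n y) N <= 1) ->
  nsum (fun z => (if (y =? csnd z)%nat then 1 else 0) * G (cfst z) (csnd z)) = nsum (fun n => G n y).
Proof.
  intros Hpos Hub.
  set (f := fun z => (if (y =? csnd z)%nat then 1 else 0) * G (cfst z) (csnd z)).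
  set (v := fun N => psum (fun n => G n y) N).
  assert (Hv : Un_growing v) by (intro n; unfold v; simpl; specialize (Hpos n y); lra).
  destruct (growing_cv v Hv) as [l Hl]; [exists 1; intros r [i ->]; apply Hub|].
  assert (Hf_tri : forall K, psum f (tri K) = v (K - y)%nat).
  { intro K. unfold v. rewrite <- psum_csnd_fiber. apply psum_ext. intros z _. unfold f.
    destruct (y =? csnd z)%nat; ring. }
  assert (Hf : forall i, 0 <= f i).
  { intro i. unfold f. destruct (y =? csnd i)%nat; [rewrite Rmult_1_l; apply Hpos | lra]. }
  rewrite (nsum_psum f l), (nsum_psum _ l); auto.
  intros eps He. destruct (Hl eps He) as [N HN].
  exists (tri (N + y)). intros m Hm. unfold R_dist.
  assert (Up : psum f m <= l).
  { transitivity (psum f (tri (m + y))).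
    - apply psum_mono; auto. pose proof (le_tri (m + y)). lia.
    - rewrite Hf_tri. apply growing_ineq; auto. }
  assert (Lo : psum f (tri (N + y)) <= psum f m) by (apply psum_mono; auto).
  rewrite Hf_tri in Lo. replace (N + y - y)%nat with N in Lo by lia.
  specialize (HN N (le_n N)). unfold R_dist in HN.
  pose proof (growing_ineq v l Hv Hl N).
  rewrite Rabs_left1 in HN by lra. rewrite Rabs_left1 by lra. lra.
Qed.

(** * Geometric and Bernoulli probabilistic functions *)

Definition coinPF (m : nat) : PF (S m) :=
  compPF (n := 1) randPF (fun _ => detPF (fun _ : Vector.t nat (S m) => 0%nat)).

Definition geomPF (m : nat) : PF m := muPF (coinPF m).

Lemma PR_geomPF m : PR m (geomPF m).
Proof. apply PR_mu, PR_comp; [apply PR_rand | intros _; apply (PRdet_zero (S m))]. Qed.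

Lemma coinPF_val m v y : coinPF m v y = if (y =? 0)%nat then /2 else if (y =? 1)%nat then /2 else 0.
Proof.
  unfold coinPF, compPF, detPF.
  rewrite (sumvec_dirac 1 (fun zs => randPF zs y) (fun _ => 0%nat)). reflexivity.
Qed.

Lemma prodlt_const y c : prodlt y (fun _ => c) = c ^ y.
Proof. induction y; simpl; [reflexivity|]. rewrite IHy. ring. Qed.

Lemma geomPF_val m v i : geomPF m v i = (/2) ^ (S i).
Proof.
  unfold geomPF, muPF. rewrite coinPF_val. simpl Nat.eqb. cbv iota.
  assert (Hfail : forall w, nsum (fun j => coinPF m (Vector.shiftin w v) (S j)) = /2).
  { intro w. rewrite <- (nsum_single 0 (/2)). f_equal. apply functional_extensionality; intro j.
    rewrite coinPF_val. destruct j; reflexivity. }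
  transitivity (/2 * prodlt i (fun _ => /2)).
  - f_equal. f_equal. apply functional_extensionality; intro w. apply Hfail.
  - rewrite prodlt_const. reflexivity.
Qed.

Section Bernoulli.
Variable k : nat.
Variable T : list nat -> nat.

Definition bern_args (i : Fin.t (S (S k))) : PF (S k) :=
  Fin.caseS' i (fun _ => PF (S k)) (geomPF (S k)) (fun j => projPF (S k) j).

(** [bernPF xz] evaluates the deterministic test [T] at [i :: xz] for a
    geometric [i]. *)
Definition bernPF : PF (S k) := compPF (n := S (S k)) (detPF (fun v => T (Vector.to_list v))) bern_args.

Lemma PR_bernPF : PRdet (S (S k)) T -> PR (S k) bernPF.
Proof.
  intro HT. apply PR_comp; [exact HT|].
  intro i. apply (Fin.caseS' i); [apply PR_geomPF | intro j; apply PR_proj].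
Qed.

Lemma bernPF_val xz j :
  bernPF xz j = nsum (fun i => (/2) ^ (S i) * (if (j =? T (i :: Vector.to_list xz))%nat then 1 else 0)).
Proof.
  unfold bernPF, compPF. rewrite sumvec_S. f_equal. apply functional_extensionality; intro i.
  transitivity (sumvec (S k) (fun v =>
     (detPF (fun v0 : Vector.t nat (S (S k)) => T (Vector.to_list v0)) (Vector.cons nat i (S k) v) j
      * (/2) ^ (S i)) *
     prodfin (S k) (fun l => if (Vector.nth v l =? Vector.nth xz l)%nat then 1 else 0))).
  - f_equal. apply functional_extensionality; intro v. rewrite prodfin_S.
    unfold bern_args. simpl Fin.caseS'. rewrite geomPF_val. unfold projPF. simpl Vector.nth. ring.
  - rewrite sumvec_dirac, vec_of_fun_nth. unfold detPF. rewrite VectorSpec.to_list_cons. ring.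
Qed.

Lemma bernPF_ratio (A B : Vector.t nat (S k) -> nat) xz :
  (forall i, T (i :: Vector.to_list xz) = (1 - bin_digit (A xz) (B xz) i)%nat) ->
  bernPF xz 0%nat = ratio (A xz) (B xz) /\
  nsum (fun j => bernPF xz (S j)) = 1 - ratio (A xz) (B xz).
Proof.
  intro HT. set (d := bin_digit (A xz) (B xz)).
  assert (Hterm : forall j i, (/2) ^ (S i) * (if (j =? T (i :: Vector.to_list xz))%nat then 1 else 0)
      = INR (if (j =? 1 - d i)%nat then 1 else 0) * (/2) ^ (S i)).
  { intros j i. rewrite HT. fold (d i). destruct (j =? 1 - d i)%nat; simpl; ring. }
  assert (Hd : forall i, d i = 0%nat \/ d i = 1%nat)
    by (intro i; pose proof (bin_digit_le_1 (A xz) (B xz) i); unfold d; lia).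
  split.
  - rewrite bernPF_val. apply (nsum_ext_spec _ _ _ (Hterm 0%nat)).
    replace (fun i => INR (if (0 =? 1 - d i)%nat then 1 else 0) * (/2) ^ (S i))
      with (fun i => INR (d i) * (/2) ^ (S i)); [apply infinite_sum_bin_digits|].
    apply functional_extensionality. intro i. destruct (Hd i) as [-> | ->]; reflexivity.
  - rewrite <- (nsum_single 0 (1 - ratio (A xz) (B xz))). f_equal. apply functional_extensionality; intro j.
    rewrite bernPF_val. destruct j as [|j].
    + simpl. apply (nsum_ext_spec _ _ _ (Hterm 1%nat)).
      replace (fun i => INR (if (1 =? 1 - d i)%nat then 1 else 0) * (/2) ^ (S i))
        with (fun i => INR (1 - d i) * (/2) ^ (S i)); [apply infinite_sum_bin_digits_compl|].
      apply functional_extensionality. intro i. destruct (Hd i) as [-> | ->]; reflexivity.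
    + change (if (S j =? 0)%nat then 1 - ratio (A xz) (B xz) else 0) with 0.
      transitivity (nsum (fun _ => 0)); [|apply nsum_zero]. f_equal. apply functional_extensionality; intro i.
      rewrite Hterm. destruct (Hd i) as [-> | ->]; simpl; ring.
Qed.

Definition outPF : PF k := compPF (n := 1) (detPF (fun v => csnd (Vector.hd v))) (fun _ => muPF bernPF).

Lemma PR_outPF : PRdet (S (S k)) T -> PR k outPF.
Proof.
  intro HT. apply PR_comp; [|intros _; apply PR_mu, PR_bernPF, HT].
  pose proof (PRdet_csnd 1 (fun l => nth 0 l 0%nat) (PRdet_var 1 0)) as H. unfold PRdet in H.
  replace (detPF (fun v : Vector.t nat 1 => csnd (Vector.hd v))) with
    (detPF (fun x : Vector.t nat 1 => csnd (nth 0 (Vector.to_list x) 0%nat))); [exact H|].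
  unfold detPF. apply functional_extensionality; intro x. rewrite (VectorSpec.to_list_hd _ _ x 0%nat).
  destruct (Vector.to_list x); reflexivity.
Qed.

Lemma outPF_val x y : outPF x y = nsum (fun z => (if (y =? csnd z)%nat then 1 else 0) * muPF bernPF x z).
Proof.
  unfold outPF, compPF. rewrite sumvec_S. f_equal. apply functional_extensionality; intro z.
  simpl. unfold detPF. simpl. ring.
Qed.

End Bernoulli.

(** * Simulation of a machine *)

Lemma PRdet_bin_digit k A B I :
  PRdet k A -> PRdet k B -> PRdet k I -> PRdet k (fun l => bin_digit (A l) (B l) (I l)).
Proof.
  intros HA HB HI. unfold bin_digit, bin_rem.
  apply PRdet_if_leb; auto; [apply PRdet_const|].
  apply PRdet_if_leb; auto; [|apply PRdet_const | apply PRdet_const].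
  apply PRdet_mul; [apply PRdet_const|].
  apply (PRdet_iter k A I (fun x s => double_rem (B x) s)); auto.
  unfold double_rem. apply PRdet_if_leb; [apply PRdet_weaken; auto | | |];
    repeat first [apply PRdet_sub | apply PRdet_mul | apply PRdet_const | apply PRdet_var
                 | apply PRdet_weaken; auto].
Qed.

Lemma PRdet_middle k F : PRdet k F -> PRdet (S (S k)) (fun l => F (firstn k (tl l))).
Proof.
  intro HF.
  eapply PRdet_ext;
    [|exact (PRdet_comp k (S (S k)) F (fun i l => nth (S i) l 0%nat) HF (fun i _ => PRdet_var _ _))].
  intros l Hl. cbv beta. f_equal. destruct l as [|a l]; [simpl in Hl; lia|].
  simpl tl. rewrite <- map_nth_seq_firstn by (simpl in Hl; lia). reflexivity.
Qed.

Section Simulation.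
Variable M : PTM.
Variable k : nat.

(** The stopping test reads argument lists [i :: x ++ [z]]: the index [i] of
    a binary digit, the input [x] and the stage [z]. *)
Definition input_config (l : list nat) : nat := init_code M (enc_tuple_code M (firstn k (tl l))).
Definition count_at (l : list nat) (w : nat) : nat := halting_count M (input_config l) (cfst w) (csnd w).
Definition test_num (l : list nat) : nat := (let z := nth (S k) l 0 in count_at l z * 2 ^ (z - cfst z))%nat.
Definition test_den (l : list nat) : nat :=
  (let z := nth (S k) l 0 in 2 ^ z - bsum z (fun w => count_at l w * 2 ^ (z - cfst w)))%nat.
Definition stage_test (l : list nat) : nat := (1 - bin_digit (test_num l) (test_den l) (nth 0 l 0))%nat.

Lemma PRdet_input_config : PRdet (S (S k)) input_config.
Proof. apply PRdet_init_code, (PRdet_middle k (enc_tuple_code M)), PRdet_enc_tuple_code. Qed.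

Lemma PRdet_stage_test : PRdet (S (S k)) stage_test.
Proof.
  apply PRdet_sub; [apply PRdet_const|]. apply PRdet_bin_digit; [| |apply PRdet_var].
  - apply PRdet_mul; [apply PRdet_halting_count; [apply PRdet_input_config| |]|]; prdet.
  - apply PRdet_sub; [prdet|].
    apply (PRdet_bsum (S (S k)) (fun l => nth (S k) l 0%nat)
       (fun l w => count_at l w * 2 ^ (nth (S k) l 0 - cfst w))%nat); [apply PRdet_var|].
    apply PRdet_mul.
    + apply PRdet_halting_count; [|prdet|prdet].
      exact (PRdet_weaken (S (S k)) (S (S (S k))) _ ltac:(lia) PRdet_input_config).
    + apply PRdet_pow2, PRdet_sub; [|prdet].
      exact (PRdet_weaken (S (S k)) (S (S (S k))) _ ltac:(lia) (PRdet_var _ (S k))).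
Qed.

Section Input.
Variable x : Vector.t nat k.

Definition input_counts (z : nat) : nat :=
  halting_count M (config_code M (init M (enc_tuple x))) (cfst z) (csnd z).

Lemma input_counts_kraft z : (bsum (S z) (fun w => input_counts w * 2 ^ (z - cfst w)) <= 2 ^ z)%nat.
Proof. apply halting_counts_kraft. Qed.

Lemma count_at_input i z w : count_at (i :: Vector.to_list x ++ [z]) w = input_counts w.
Proof.
  unfold count_at, input_config, input_counts. simpl tl.
  rewrite firstn_app_length by apply VectorSpec.length_to_list.
  rewrite enc_tuple_code_spec, init_code_spec. reflexivity.
Qed.

Lemma stage_test_input i z :
  stage_test (i :: Vector.to_list x ++ [z]) =
  (1 - bin_digit (stage_num input_counts z) (stage_den input_counts z) i)%nat.
Proof.
  assert (Hz : nth (S k) (i :: Vector.to_list x ++ [z]) 0%nat = z).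
  { simpl. rewrite app_nth2; rewrite VectorSpec.length_to_list; [|lia]. rewrite Nat.sub_diag. reflexivity. }
  assert (Hc : count_at (i :: Vector.to_list x ++ [z]) = input_counts)
    by (apply functional_extensionality; apply count_at_input).
  unfold stage_test, test_num, test_den, stage_num, stage_den, mass_before. cbv zeta.
  rewrite Hz, Hc. reflexivity.
Qed.

Lemma muPF_stage_test z : muPF (bernPF k stage_test) x z = stage_prob input_counts z.
Proof.
  apply (muPF_hazard input_counts input_counts_kraft). intro w.
  assert (Hlast : last (Vector.to_list (Vector.shiftin w x)) 0%nat = w)
    by (rewrite to_list_shiftin; apply last_last).
  pose proof (bernPF_ratio k stage_test (fun xz => stage_num input_counts (last (Vector.to_list xz) 0%nat))
                (fun xz => stage_den input_counts (last (Vector.to_list xz) 0%nat)) (Vector.shiftin w x)) as Hb.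
  cbv beta in Hb. rewrite Hlast in Hb. apply Hb.
  intro i. rewrite to_list_shiftin, stage_test_input. reflexivity.
Qed.

Lemma outPF_stage_test y : outPF k stage_test x y = IO M (enc_tuple x) (nbar y).
Proof.
  set (G := fun n y' => INR (halting_count M (config_code M (init M (enc_tuple x))) n y') * (/2) ^ n).
  rewrite outPF_val, IO_eq.
  transitivity (nsum (fun n => G n y)).
  - rewrite <- nsum_csnd_fiber.
    + f_equal. apply functional_extensionality; intro z. rewrite muPF_stage_test. reflexivity.
    + intros. apply Rmult_le_pos; [apply pos_INR | apply pow_le; lra].
    + intro N. rewrite <- (Nat.add_sub N y), <- (psum_csnd_fiber G y (N + y)).
      eapply Rle_trans; [|exact (psum_stage_prob_le_1 input_counts input_counts_kraft (tri (N + y)))].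
      apply psum_le. intros z _. unfold G, stage_prob, input_counts. destruct (y =? csnd z)%nat; [lra|].
      apply Rmult_le_pos; [apply pos_INR | apply pow_le; lra].
  - f_equal. apply functional_extensionality; intro n. unfold G. rewrite halting_count_init. reflexivity.
Qed.

End Input.
End Simulation.

Theorem mainTheorem12 : forall (k : nat) (f : PF k), PC k f -> PR k f.
Proof.
  intros k f [M HM].
  replace f with (outPF k (stage_test M k)).
  - apply PR_outPF, PRdet_stage_test.
  - apply functional_extensionality; intro x. apply functional_extensionality; intro y.
    rewrite HM. apply outPF_stage_test.
Qed.
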